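(* Let $f$ be a transcendental entire function on $\mathbb{C}$ and let $P,Q$ be polynomials such that $P-Q$ is non-constant. Then $f+P$ and $f+Q$ are algebraically independent over $\mathbb{C}$. *)

From Stdlib Require Import Reals List.
Open Scope R_scope.

Definition Cx : Type := (R * R)%type.
Definition C0 : Cx := (0, 0).
Definition C1 : Cx := (1, 0).
Definition Cadd (z w : Cx) : Cx := (fst z + fst w, snd z + snd w).
Definition Copp (z : Cx) : Cx := (- fst z, - snd z).
Definition Csub (z w : Cx) : Cx := Cadd z (Copp w).
Definition Cmul (z w : Cx) : Cx :=
  (fst z * fst w - snd z * snd w, fst z * snd w + snd z * fst w).
Definition Cnorm (z : Cx) : R := sqrt (fst z * fst z + snd z * snd z).
Fixpoint Cpow (z : Cx) (n : nat) : Cx :=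
  match n with O => C1 | S k => Cmul z (Cpow z k) end.

Definition entire (f : Cx -> Cx) : Prop :=
  forall z : Cx, exists l : Cx, forall eps : R, 0 < eps ->
    exists delta : R, 0 < delta /\
      forall h : Cx, Cnorm h < delta ->
        Cnorm (Csub (Csub (f (Cadd z h)) (f z)) (Cmul l h)) <= eps * Cnorm h.

(* Univariate polynomials over C as coefficient lists [a0; a1; ...]. *)
Definition Cpoly := list Cx.
Definition coef (p : Cpoly) (k : nat) : Cx := nth k p C0.
Fixpoint peval (p : Cpoly) (z : Cx) : Cx :=
  match p with nil => C0 | a :: q => Cadd a (Cmul z (peval q z)) end.

Definition diff_nonconstant (P Q : Cpoly) : Prop :=
  exists k : nat, (1 <= k)%nat /\ coef P k <> coef Q k.

Definition transcendental_entire (f : Cx -> Cx) : Prop :=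
  entire f /\ ~ exists p : Cpoly, forall z, f z = peval p z.

(* Bivariate polynomials over C: a coefficient array c i j, with i, j <= N
   (c i j is the coefficient of X^i Y^j). *)
Fixpoint Csum (n : nat) (F : nat -> Cx) : Cx :=
  match n with O => C0 | S k => Cadd (Csum k F) (F k) end.

Definition beval (N : nat) (c : nat -> nat -> Cx) (x y : Cx) : Cx :=
  Csum (S N) (fun i => Csum (S N) (fun j => Cmul (c i j) (Cmul (Cpow x i) (Cpow y j)))).

Definition alg_independent (g h : Cx -> Cx) : Prop :=
  forall (N : nat) (c : nat -> nat -> Cx),
    (exists i j, (i <= N)%nat /\ (j <= N)%nat /\ c i j <> C0) ->
    exists z : Cx, beval N c (g z) (h z) <> C0.

From Pilot Require Import Defs.
From Stdlib Require Import Reals List Lra Lia Psatz Classical.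
From Coquelicot Require Import Coquelicot.
Open Scope R_scope.

(* Suppose a nonzero
   polynomial F satisfies F(f + P, f + Q) = 0.  With d = P - Q and Y = f + Q,
   the polynomial H(d, Y) = F(Y + d, Y) is nonzero and H(d(z), Y(z)) = 0 for
   all z.  Roots of a nonzero bivariate polynomial are polynomially bounded
   in d once |d| is large, and |d(z)| -> oo; hence f + Q, and with it f, has
   polynomial growth.  By Liouville's theorem for functions of polynomial
   growth, f is a polynomial: a contradiction. *)

(* The complex numbers [Cx] of [Defs] are Coquelicot's [C] (pairs of reals),
   and the operations of [Defs] unfold to Coquelicot's. *)

Lemma Cnorm_Cmod (z : C) : Cnorm z = Cmod z.
Proof. unfold Cnorm, Cmod. f_equal. simpl. ring. Qed.

(* Ring identities mixing the operations of [Defs] and of Coquelicot: the goal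
   is retyped in [C] (via a trivial [+ 0] on both sides) and the operations
   of [Defs] are folded into Coquelicot's before calling [ring]. *)
Lemma Cplus0_inj (a b : C) : (a + 0 = b + 0)%C -> a = b.
Proof. rewrite !Cplus_0_r. auto. Qed.

Ltac cring := match goal with |- @eq _ ?a ?b => change (@eq C a b) end; apply Cplus0_inj;
  try change Defs.Cmul with Cmult; try change Defs.Cadd with Cplus;
  try change Defs.Csub with Cminus; try change Defs.Copp with Complex.Copp;
  try change C0 with (RtoC 0); ring.

Lemma Cmod_le_abs (x : C) : Cmod x <= Rabs (fst x) + Rabs (snd x).
Proof.
  unfold Cmod. rewrite <- (sqrt_pow2 (Rabs (fst x) + Rabs (snd x)))
    by (pose proof (Rabs_pos (fst x)); pose proof (Rabs_pos (snd x)); lra).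
  apply sqrt_le_1_alt.
  pose proof (Rabs_pos (fst x)); pose proof (Rabs_pos (snd x)).
  rewrite <- (pow2_abs (fst x)), <- (pow2_abs (snd x)). nra.
Qed.

Lemma fst_le_Cmod (x : C) : Rabs (fst x) <= Cmod x.
Proof. pose proof (Rmax_Cmod x). pose proof (Rmax_l (Rabs (fst x)) (Rabs (snd x))). lra. Qed.

Lemma snd_le_Cmod (x : C) : Rabs (snd x) <= Cmod x.
Proof. pose proof (Rmax_Cmod x). pose proof (Rmax_r (Rabs (fst x)) (Rabs (snd x))). lra. Qed.

Lemma Cmod_tri_sub (x y : C) : Cmod x - Cmod y <= Cmod (x - y).
Proof. pose proof (Cmod_triangle (x - y) y). replace (x - y + y)%C with x in H by ring. lra. Qed.

Lemma Cmod_sub_le (x y : C) : Cmod (x - y) <= Cmod x + Cmod y.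
Proof. pose proof (Cmod_triangle x (- y)). rewrite Cmod_opp in H. exact H. Qed.

Lemma Cminus_neq0 (a b : C) : a <> b -> (a - b)%C <> RtoC 0.
Proof. intros H E. apply H. replace a with ((a - b) + b)%C by ring. rewrite E. ring. Qed.

Lemma neq_fst (w u : C) : fst w <> fst u -> w <> u.
Proof. intros H E. apply H. rewrite E. auto. Qed.

Lemma neq_snd (w u : C) : snd w <> snd u -> w <> u.
Proof. intros H E. apply H. rewrite E. auto. Qed.

Lemma le_eps_eq0 x K e0 : 0 <= x -> 0 <= K -> 0 < e0 ->
  (forall eps, 0 < eps < e0 -> x <= eps * K) -> x = 0.
Proof.
  intros Hx HK He0 H. destruct (Req_dec x 0) as [|Hne]; auto.
  set (eps := Rmin (e0 / 2) (x / (2 * (K + 1)))).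
  assert (Heps : 0 < eps) by (apply Rmin_pos; apply Rdiv_lt_0_compat; lra).
  assert (Heps1 : eps <= e0 / 2) by apply Rmin_l.
  assert (Heps2 : eps <= x / (2 * (K + 1))) by apply Rmin_r.
  assert (Hsmall : eps * K < x).
  { apply Rle_lt_trans with (x / (2 * (K + 1)) * K). apply Rmult_le_compat_r; lra.
    replace (x / (2 * (K + 1)) * K) with (x * (K / (2 * (K + 1)))) by (field; lra).
    rewrite <- (Rmult_1_r x) at 2. apply Rmult_lt_compat_l. lra.
    apply Rcomplements.Rlt_div_l; lra. }
  specialize (H eps ltac:(lra)). lra.
Qed.

Definition near0 (P : C -> Prop) : Prop :=
  exists delta, 0 < delta /\ forall h, Cmod h < delta -> P h.

Lemma near0_and (P1 P2 : C -> Prop) : near0 P1 -> near0 P2 -> near0 (fun h => P1 h /\ P2 h).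
Proof.
  intros [d1 [Hd1 H1]] [d2 [Hd2 H2]]. exists (Rmin d1 d2). split. apply Rmin_pos; auto.
  intros h Hh. pose proof (Rmin_l d1 d2). pose proof (Rmin_r d1 d2). split; [apply H1|apply H2]; lra.
Qed.

Lemma near0_small r : 0 < r -> near0 (fun h => Cmod h <= r).
Proof. intros Hr. exists r. split; auto. intros; lra. Qed.

Lemma near0_small_mul K s : 0 < K -> 0 < s -> near0 (fun h => K * Cmod h <= s).
Proof.
  intros HK Hs. exists (s / K). split. apply Rdiv_lt_0_compat; auto.
  intros h Hh. apply Rlt_le in Hh. apply (Rmult_le_compat_l K) in Hh; [|lra].
  replace (K * (s / K)) with s in Hh by (field; lra). exact Hh.
Qed.

Lemma near0_mono (P1 P2 : C -> Prop) : near0 P1 -> (forall h, P1 h -> P2 h) -> near0 P2.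
Proof. intros [d [Hd H1]] H. exists d. split; auto. Qed.

Definition has_cderiv (g : C -> C) (z l : C) : Prop :=
  forall eps : R, 0 < eps -> near0 (fun h => Cmod (g (z + h) - g z - l * h)%C <= eps * Cmod h).

Definition cdiff (g : C -> C) (z : C) : Prop := exists l, has_cderiv g z l.

Definition ccont (g : C -> C) (z : C) : Prop :=
  forall eps : R, 0 < eps -> near0 (fun h => Cmod (g (z + h) - g z)%C < eps).

Lemma entire_cdiff f : entire f -> forall z, cdiff f z.
Proof.
  intros Hf z. destruct (Hf z) as [l Hl]. exists l. intros eps Heps.
  destruct (Hl eps Heps) as [d [Hd H]]. exists d. split; auto.
  intros h Hh. rewrite <- Cnorm_Cmod in Hh. specialize (H h Hh).
  rewrite !Cnorm_Cmod in H. exact H.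
Qed.

Lemma has_cderiv_lipschitz g z l : has_cderiv g z l ->
  near0 (fun h => Cmod (g (z + h) - g z)%C <= (Cmod l + 1) * Cmod h).
Proof.
  intros H. apply (near0_mono _ _ (H 1 Rlt_0_1)); intros h Hh; cbv beta in Hh |- *.
  replace (g (z + h) - g z)%C with ((g (z + h) - g z - l * h) + l * h)%C by ring.
  eapply Rle_trans. apply Cmod_triangle. rewrite Cmod_mult. lra.
Qed.

Lemma cdiff_ccont g z : cdiff g z -> ccont g z.
Proof.
  intros [l H] eps Heps. pose proof (Cmod_ge_0 l).
  apply (near0_mono _ _ (near0_and _ _ (has_cderiv_lipschitz _ _ _ H)
                           (near0_small_mul (Cmod l + 1) (eps / 2) ltac:(lra) ltac:(lra))));
    intros h [H1 H2]. lra.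
Qed.

Lemma has_cderiv_const c z : has_cderiv (fun _ => c) z 0.
Proof.
  intros eps Heps. exists 1. split; [lra|]. intros h _.
  replace (c - c - 0 * h)%C with (RtoC 0) by ring. rewrite Cmod_0.
  pose proof (Cmod_ge_0 h). nra.
Qed.

Lemma has_cderiv_id z : has_cderiv (fun w => w) z 1.
Proof.
  intros eps Heps. exists 1. split; [lra|]. intros h _.
  replace (z + h - z - 1 * h)%C with (RtoC 0) by ring. rewrite Cmod_0.
  pose proof (Cmod_ge_0 h). nra.
Qed.

Lemma has_cderiv_add g k z l m : has_cderiv g z l -> has_cderiv k z m ->
  has_cderiv (fun w => g w + k w)%C z (l + m)%C.
Proof.
  intros Hg Hk eps Heps.
  apply (near0_mono _ _ (near0_and _ _ (Hg (eps/2) ltac:(lra)) (Hk (eps/2) ltac:(lra)))); intros h Hh; cbv beta in Hh |- *.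
  replace (g (z + h) + k (z + h) - (g z + k z) - (l + m) * h)%C with
    ((g (z + h) - g z - l * h) + (k (z + h) - k z - m * h))%C by ring.
  eapply Rle_trans. apply Cmod_triangle. lra.
Qed.

Lemma has_cderiv_scal c g z l : has_cderiv g z l -> has_cderiv (fun w => c * g w)%C z (c * l)%C.
Proof.
  intros Hg eps Heps. pose proof (Cmod_ge_0 c) as Hc0.
  apply (near0_mono _ _ (Hg (eps / (Cmod c + 1)) ltac:(apply Rdiv_lt_0_compat; lra))); intros h Hh; cbv beta in Hh |- *.
  replace (c * g (z + h) - c * g z - c * l * h)%C with (c * (g (z + h) - g z - l * h))%C by ring.
  rewrite Cmod_mult. pose proof (Cmod_ge_0 h).
  apply Rle_trans with (Cmod c * (eps / (Cmod c + 1) * Cmod h)).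
  apply Rmult_le_compat_l; auto.
  replace (Cmod c * (eps / (Cmod c + 1) * Cmod h)) with ((Cmod c / (Cmod c + 1)) * (eps * Cmod h)) by (field; lra).
  rewrite <- (Rmult_1_l (eps * Cmod h)) at 2. apply Rmult_le_compat_r.
  nra. apply Rcomplements.Rle_div_l; lra.
Qed.

(* Product rule.  The remainder splits as
     e_g(h) k(z+h) + g(z) e_k(h) + l h (k(z+h) - k(z)),
   and each term is at most [eps/3 |h|] for small [h]. *)
Lemma has_cderiv_mul g k z l m : has_cderiv g z l -> has_cderiv k z m ->
  has_cderiv (fun w => g w * k w)%C z (l * k z + g z * m)%C.
Proof.
  intros Hg Hk eps Heps.
  pose proof (Cmod_ge_0 l) as Hl0. pose proof (Cmod_ge_0 m) as Hm0.
  set (A := Cmod (k z) + 1). set (B := Cmod (g z) + 1). set (L := (Cmod l + 1) * (Cmod m + 1)).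
  assert (HA : 0 < A) by (unfold A; pose proof (Cmod_ge_0 (k z)); lra).
  assert (HB : 0 < B) by (unfold B; pose proof (Cmod_ge_0 (g z)); lra).
  assert (HL : 0 < L) by (unfold L; nra).
  apply (near0_mono _ _
    (near0_and _ _ (near0_and _ _ (Hg (eps / (3 * A)) ltac:(apply Rdiv_lt_0_compat; lra))
                                  (Hk (eps / (3 * B)) ltac:(apply Rdiv_lt_0_compat; lra)))
       (near0_and _ _ (has_cderiv_lipschitz _ _ _ Hk)
          (near0_and _ _ (near0_small_mul (Cmod m + 1) 1 ltac:(lra) ltac:(lra))
                         (near0_small_mul L (eps / 3) HL ltac:(lra))))));
    intros h [[Eg Ek] [Lk [Hh1 Hh2]]].
  pose proof (Cmod_ge_0 h) as Hh0.
  assert (Hkk : Cmod (k (z + h)%C) <= A).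
  { replace (k (z + h)%C) with ((k (z + h) - k z) + k z)%C by ring.
    eapply Rle_trans. apply Cmod_triangle. unfold A. lra. }
  replace (g (z + h) * k (z + h) - g z * k z - (l * k z + g z * m) * h)%C with
    ((g (z + h) - g z - l * h) * k (z + h) + g z * (k (z + h) - k z - m * h)
     + l * h * (k (z + h) - k z))%C by ring.
  assert (T1 : Cmod ((g (z + h) - g z - l * h) * k (z + h))%C <= eps / 3 * Cmod h).
  { rewrite Cmod_mult. apply Rle_trans with (eps / (3 * A) * Cmod h * A).
    apply Rmult_le_compat; auto using Cmod_ge_0. right. field. lra. }
  assert (T2 : Cmod (g z * (k (z + h) - k z - m * h))%C <= eps / 3 * Cmod h).
  { rewrite Cmod_mult. apply Rle_trans with (B * (eps / (3 * B) * Cmod h)).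
    apply Rmult_le_compat; auto using Cmod_ge_0. unfold B; lra. right. field. lra. }
  assert (T3 : Cmod (l * h * (k (z + h) - k z))%C <= eps / 3 * Cmod h).
  { rewrite !Cmod_mult.
    apply Rle_trans with ((Cmod l + 1) * Cmod h * ((Cmod m + 1) * Cmod h)).
    { pose proof (Cmod_ge_0 (k (z + h) - k z)%C). apply Rmult_le_compat; nra. }
    replace ((Cmod l + 1) * Cmod h * ((Cmod m + 1) * Cmod h)) with (L * Cmod h * Cmod h) by (unfold L; ring).
    apply Rmult_le_compat_r; auto. }
  eapply Rle_trans. apply Cmod_triangle.
  eapply Rle_trans. apply Rplus_le_compat_r. apply Cmod_triangle. lra.
Qed.

Lemma has_cderiv_inv_lin u z : z <> u ->
  has_cderiv (fun w => / (w - u))%C z (- / ((z - u) * (z - u)))%C.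
Proof.
  intros Hzu eps Heps.
  assert (Hn := Cminus_neq0 _ _ Hzu).
  set (r := Cmod (z - u)). assert (Hr : 0 < r) by (apply Cmod_gt_0; auto).
  apply (near0_mono _ _ (near0_and _ _ (near0_small (r / 2) ltac:(lra))
       (near0_small (eps * r * r * r / 2) ltac:(apply Rdiv_lt_0_compat; [repeat apply Rmult_lt_0_compat|]; lra)))); intros h Hh; cbv beta in Hh |- *.
  destruct Hh as [Hh1 Hh2]. pose proof (Cmod_ge_0 h) as Hh0.
  assert (Hzh : Cmod (z + h - u)%C >= r / 2).
  { pose proof (Cmod_tri_sub (z - u) (- h)). replace (z - u - - h)%C with (z + h - u)%C in H by ring.
    rewrite Cmod_opp in H. fold r in H. lra. }
  assert (Hn2 : (z + h - u)%C <> 0). { intro E. rewrite E, Cmod_0 in Hzh. lra. }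
  replace (/ (z + h - u) - / (z - u) - - / ((z - u) * (z - u)) * h)%C with
     (h * h * / ((z - u) * (z - u) * (z + h - u)))%C by (field; auto).
  rewrite Cmod_mult, Cmod_mult, Cmod_inv, !Cmod_mult by (repeat apply Cmult_neq_0; auto).
  fold r.
  apply Rle_trans with (Cmod h * Cmod h * / (r * r * (r / 2))).
  - apply Rmult_le_compat_l. nra. apply Rinv_le_contravar.
    repeat apply Rmult_lt_0_compat; lra. apply Rmult_le_compat_l; nra.
  - replace (Cmod h * Cmod h * / (r * r * (r / 2))) with ((Cmod h * 2 / (r * r * r)) * Cmod h) by (field; lra).
    apply Rmult_le_compat_r; auto.
    apply Rcomplements.Rle_div_l. repeat apply Rmult_lt_0_compat; lra.
    nra.
Qed.

Lemma cdiff_ext g k z : (forall w, g w = k w) -> cdiff g z -> cdiff k z.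
Proof.
  intros E [l H]. exists l. intros eps He. apply (near0_mono _ _ (H eps He)); intros h Hh; cbv beta in Hh |- *.
  rewrite <- !E. auto.
Qed.
Lemma cdiff_const c z : cdiff (fun _ => c) z.
Proof. eexists. apply has_cderiv_const. Qed.
Lemma cdiff_id z : cdiff (fun w => w) z.
Proof. eexists. apply has_cderiv_id. Qed.
Lemma cdiff_add g k z : cdiff g z -> cdiff k z -> cdiff (fun w => g w + k w)%C z.
Proof. intros [l Hl] [m Hm]. eexists. apply has_cderiv_add; eauto. Qed.
Lemma cdiff_scal c g z : cdiff g z -> cdiff (fun w => c * g w)%C z.
Proof. intros [l Hl]. eexists. apply has_cderiv_scal; eauto. Qed.
Lemma cdiff_mul g k z : cdiff g z -> cdiff k z -> cdiff (fun w => g w * k w)%C z.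
Proof. intros [l Hl] [m Hm]. eexists. apply has_cderiv_mul; eauto. Qed.
Lemma cdiff_sub g k z : cdiff g z -> cdiff k z -> cdiff (fun w => g w - k w)%C z.
Proof.
  intros Hg Hk. apply cdiff_ext with (fun w => g w + (-1) * k w)%C.
  intros; ring. apply cdiff_add; auto. apply cdiff_scal; auto.
Qed.
Lemma cdiff_inv_lin u z : z <> u -> cdiff (fun w => / (w - u))%C z.
Proof. intros H. eexists. apply has_cderiv_inv_lin; auto. Qed.

Definition seg_integral (g : R -> C) (a b : R) : C :=
  (RInt (fun t => fst (g t)) a b, RInt (fun t => snd (g t)) a b).
Definition seg_integrable (g : R -> C) (a b : R) : Prop :=
  ex_RInt (fun t => fst (g t)) a b /\ ex_RInt (fun t => snd (g t)) a b.

Lemma Cmod_im t : Cmod (0, t) = Rabs t.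
Proof. unfold Cmod. simpl. rewrite <- sqrt_Rsqr_abs. f_equal. unfold Rsqr. ring. Qed.

Lemma ccont_horizontal g y x0 : ccont g (x0, y) ->
  continuous (fun x => fst (g (x, y))) x0 /\ continuous (fun x => snd (g (x, y))) x0.
Proof.
  intros Hc. split; apply continuity_pt_filterlim; intros eps Heps;
  destruct (Hc eps Heps) as [d [Hd H]]; exists d; split; auto;
  intros x [_ Hx]; change R in x; unfold R_dist in *;
  specialize (H (RtoC (x - x0))); rewrite Cmod_R in H; specialize (H Hx);
  replace ((x0, y) + RtoC (x - x0))%C with (x, y) in H
    by (apply injective_projections; simpl; ring).
  - eapply Rle_lt_trans; [|exact H]. apply (fst_le_Cmod (g (x, y) - g (x0, y))%C).
  - eapply Rle_lt_trans; [|exact H]. apply (snd_le_Cmod (g (x, y) - g (x0, y))%C).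
Qed.

Lemma ccont_vertical g x y0 : ccont g (x, y0) ->
  continuous (fun y => fst (g (x, y))) y0 /\ continuous (fun y => snd (g (x, y))) y0.
Proof.
  intros Hc. split; apply continuity_pt_filterlim; intros eps Heps;
  destruct (Hc eps Heps) as [d [Hd H]]; exists d; split; auto;
  intros y [_ Hy]; change R in y; unfold R_dist in *;
  specialize (H (0, y - y0)); rewrite Cmod_im in H; specialize (H Hy);
  replace ((x, y0) + (0, (y - y0)%R))%C with (x, y) in H
    by (apply injective_projections; simpl; ring).
  - eapply Rle_lt_trans; [|exact H]. apply (fst_le_Cmod (g (x, y) - g (x, y0))%C).
  - eapply Rle_lt_trans; [|exact H]. apply (snd_le_Cmod (g (x, y) - g (x, y0))%C).
Qed.

Lemma seg_integrable_horizontal g y a b : a <= b -> (forall x, a <= x <= b -> ccont g (x, y)) ->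
  seg_integrable (fun x => g (x, y)) a b.
Proof.
  intros Hab H. split; apply (ex_RInt_continuous (V := R_CompleteNormedModule));
  rewrite Rmin_left, Rmax_right by lra; intros z Hz; apply (ccont_horizontal g y z (H z Hz)).
Qed.

Lemma seg_integrable_vertical g x a b : a <= b -> (forall y, a <= y <= b -> ccont g (x, y)) ->
  seg_integrable (fun y => g (x, y)) a b.
Proof.
  intros Hab H. split; apply (ex_RInt_continuous (V := R_CompleteNormedModule));
  rewrite Rmin_left, Rmax_right by lra; intros z Hz; apply (ccont_vertical g x z (H z Hz)).
Qed.

Lemma seg_integrable_split g a b c : a <= b <= c -> seg_integrable g a c ->
  seg_integrable g a b /\ seg_integrable g b c.
Proof.
  intros Habc [H1 H2]. split; split;
  [eapply (ex_RInt_Chasles_1 (V := R_CompleteNormedModule)) | eapply (ex_RInt_Chasles_1 (V := R_CompleteNormedModule))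
  |eapply (ex_RInt_Chasles_2 (V := R_CompleteNormedModule)) | eapply (ex_RInt_Chasles_2 (V := R_CompleteNormedModule))];
  eauto.
Qed.

Lemma seg_integral_plus g k a b : seg_integrable g a b -> seg_integrable k a b ->
  seg_integral (fun t => g t + k t)%C a b = (seg_integral g a b + seg_integral k a b)%C.
Proof.
  intros [g1 g2] [k1 k2]. unfold seg_integral. apply injective_projections; simpl;
  rewrite <- (RInt_plus (V := R_CompleteNormedModule)); auto.
Qed.

Lemma seg_integral_scal c g a b : seg_integrable g a b ->
  seg_integral (fun t => c * g t)%C a b = (c * seg_integral g a b)%C.
Proof.
  intros [g1 g2]. unfold seg_integral. apply injective_projections; simpl.
  - transitivity (RInt (fun t => minus (scal (fst c) (fst (g t))) (scal (snd c) (snd (g t)))) a b).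
    { apply RInt_ext. intros. reflexivity. }
    rewrite (RInt_minus (V := R_CompleteNormedModule)) by (apply (ex_RInt_scal (V := R_CompleteNormedModule)); auto).
    rewrite !(RInt_scal (V := R_CompleteNormedModule)) by auto. reflexivity.
  - transitivity (RInt (fun t => plus (scal (fst c) (snd (g t))) (scal (snd c) (fst (g t)))) a b).
    { apply RInt_ext. intros. reflexivity. }
    rewrite (RInt_plus (V := R_CompleteNormedModule)) by (apply (ex_RInt_scal (V := R_CompleteNormedModule)); auto).
    rewrite !(RInt_scal (V := R_CompleteNormedModule)) by auto. reflexivity.
Qed.

Lemma seg_integral_chasles g a b c : seg_integrable g a b -> seg_integrable g b c ->
  (seg_integral g a b + seg_integral g b c)%C = seg_integral g a c.
Proof.
  intros [g1 g2] [k1 k2]. unfold seg_integral. apply injective_projections; simpl;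
  apply (RInt_Chasles (V := R_CompleteNormedModule)); auto.
Qed.

Lemma seg_integral_ext g k a b : a <= b -> (forall t, a <= t <= b -> g t = k t) ->
  seg_integral g a b = seg_integral k a b.
Proof.
  intros Hab H. unfold seg_integral. f_equal; apply RInt_ext; rewrite Rmin_left, Rmax_right by lra;
  intros x Hx; rewrite H; auto; lra.
Qed.

Lemma seg_integral_bound g a b M : a <= b -> seg_integrable g a b ->
  (forall t, a <= t <= b -> Cmod (g t) <= M) ->
  Cmod (seg_integral g a b) <= 2 * (b - a) * M.
Proof.
  intros Hab [g1 g2] HM. eapply Rle_trans. apply Cmod_le_abs. unfold seg_integral; simpl.
  assert (A1 : Rabs (RInt (fun t => fst (g t)) a b) <= (b - a) * M).
  { apply abs_RInt_le_const; auto. intros t Ht. eapply Rle_trans. apply fst_le_Cmod. auto. }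
  assert (A2 : Rabs (RInt (fun t => snd (g t)) a b) <= (b - a) * M).
  { apply abs_RInt_le_const; auto. intros t Ht. eapply Rle_trans. apply snd_le_Cmod. auto. }
  lra.
Qed.

(* Contour integral of [g] along the positively oriented boundary of the
   rectangle [x0, x1] x [y0, y1]: bottom + right - top - left sides
   (the vertical sides carry the factor [dz = i dy]). *)
Definition hside (g : C -> C) y a b := seg_integral (fun x => g (x, y)) a b.
Definition vside (g : C -> C) x a b := (Ci * seg_integral (fun y => g (x, y)) a b)%C.
Definition rect_integral (g : C -> C) x0 x1 y0 y1 :=
  (hside g y0 x0 x1 + vside g x1 y0 y1 - hside g y1 x0 x1 - vside g x0 y0 y1)%C.

Definition on_boundary x0 x1 y0 y1 (w : C) : Prop :=
  (x0 <= fst w <= x1 /\ (snd w = y0 \/ snd w = y1)) \/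
  (y0 <= snd w <= y1 /\ (fst w = x0 \/ fst w = x1)).
Definition cont_on_boundary (g : C -> C) x0 x1 y0 y1 : Prop :=
  forall w, on_boundary x0 x1 y0 y1 w -> ccont g w.

Lemma boundary_integrable g x0 x1 y0 y1 : x0 <= x1 -> y0 <= y1 -> cont_on_boundary g x0 x1 y0 y1 ->
  seg_integrable (fun x => g (x, y0)) x0 x1 /\ seg_integrable (fun x => g (x, y1)) x0 x1 /\
  seg_integrable (fun y => g (x0, y)) y0 y1 /\ seg_integrable (fun y => g (x1, y)) y0 y1.
Proof.
  intros Hx Hy H.
  split; [|split; [|split]];
  [apply seg_integrable_horizontal | apply seg_integrable_horizontal
  |apply seg_integrable_vertical | apply seg_integrable_vertical]; auto;
  intros t Ht; apply H; unfold on_boundary; simpl; auto.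
Qed.

(* Additivity of the contour integral when a rectangle is cut in two:
   the integrals along the common side cancel. *)
Lemma rect_integral_split_x g x0 x1 x2 y0 y1 : x0 <= x1 <= x2 ->
  (forall x, x0 <= x <= x2 -> ccont g (x, y0) /\ ccont g (x, y1)) ->
  rect_integral g x0 x2 y0 y1 = (rect_integral g x0 x1 y0 y1 + rect_integral g x1 x2 y0 y1)%C.
Proof.
  intros Hx H. unfold rect_integral, hside.
  assert (A0 : seg_integrable (fun x => g (x, y0)) x0 x2)
    by (apply seg_integrable_horizontal; [lra|]; intros; apply H; auto).
  assert (A1 : seg_integrable (fun x => g (x, y1)) x0 x2)
    by (apply seg_integrable_horizontal; [lra|]; intros; apply H; auto).
  destruct (seg_integrable_split _ _ _ _ Hx A0) as [B0 C0].
  destruct (seg_integrable_split _ _ _ _ Hx A1) as [B1 C1].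
  rewrite <- (seg_integral_chasles _ _ _ _ B0 C0), <- (seg_integral_chasles _ _ _ _ B1 C1). ring.
Qed.

Lemma rect_integral_split_y g x0 x1 y0 y1 y2 : y0 <= y1 <= y2 ->
  (forall y, y0 <= y <= y2 -> ccont g (x0, y) /\ ccont g (x1, y)) ->
  rect_integral g x0 x1 y0 y2 = (rect_integral g x0 x1 y0 y1 + rect_integral g x0 x1 y1 y2)%C.
Proof.
  intros Hy H. unfold rect_integral, vside.
  assert (A0 : seg_integrable (fun y => g (x0, y)) y0 y2)
    by (apply seg_integrable_vertical; [lra|]; intros; apply H; auto).
  assert (A1 : seg_integrable (fun y => g (x1, y)) y0 y2)
    by (apply seg_integrable_vertical; [lra|]; intros; apply H; auto).
  destruct (seg_integrable_split _ _ _ _ Hy A0) as [B0 C0].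
  destruct (seg_integrable_split _ _ _ _ Hy A1) as [B1 C1].
  rewrite <- (seg_integral_chasles _ _ _ _ B0 C0), <- (seg_integral_chasles _ _ _ _ B1 C1). ring.
Qed.

Lemma rect_integral_plus g k x0 x1 y0 y1 : x0 <= x1 -> y0 <= y1 ->
  cont_on_boundary g x0 x1 y0 y1 -> cont_on_boundary k x0 x1 y0 y1 ->
  rect_integral (fun w => g w + k w)%C x0 x1 y0 y1 = (rect_integral g x0 x1 y0 y1 + rect_integral k x0 x1 y0 y1)%C.
Proof.
  intros Hx Hy Hg Hk.
  destruct (boundary_integrable _ _ _ _ _ Hx Hy Hg) as (G1 & G2 & G3 & G4).
  destruct (boundary_integrable _ _ _ _ _ Hx Hy Hk) as (K1 & K2 & K3 & K4).
  unfold rect_integral, hside, vside.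
  rewrite (seg_integral_plus (fun x => g (x, y0)) (fun x => k (x, y0))),
    (seg_integral_plus (fun x => g (x, y1)) (fun x => k (x, y1))),
    (seg_integral_plus (fun y => g (x0, y)) (fun y => k (x0, y))),
    (seg_integral_plus (fun y => g (x1, y)) (fun y => k (x1, y))) by auto.
  ring.
Qed.

Lemma rect_integral_scal c g x0 x1 y0 y1 : x0 <= x1 -> y0 <= y1 -> cont_on_boundary g x0 x1 y0 y1 ->
  rect_integral (fun w => c * g w)%C x0 x1 y0 y1 = (c * rect_integral g x0 x1 y0 y1)%C.
Proof.
  intros Hx Hy Hg.
  destruct (boundary_integrable _ _ _ _ _ Hx Hy Hg) as (G1 & G2 & G3 & G4).
  unfold rect_integral, hside, vside.
  rewrite (seg_integral_scal c (fun x => g (x, y0))), (seg_integral_scal c (fun x => g (x, y1))),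
    (seg_integral_scal c (fun y => g (x0, y))), (seg_integral_scal c (fun y => g (x1, y))) by auto.
  ring.
Qed.

Lemma rect_integral_ext g k x0 x1 y0 y1 : x0 <= x1 -> y0 <= y1 ->
  (forall w, on_boundary x0 x1 y0 y1 w -> g w = k w) ->
  rect_integral g x0 x1 y0 y1 = rect_integral k x0 x1 y0 y1.
Proof.
  intros Hx Hy H. unfold rect_integral, hside, vside.
  rewrite (seg_integral_ext (fun x => g (x, y0)) (fun x => k (x, y0))),
    (seg_integral_ext (fun x => g (x, y1)) (fun x => k (x, y1))),
    (seg_integral_ext (fun y => g (x0, y)) (fun y => k (x0, y))),
    (seg_integral_ext (fun y => g (x1, y)) (fun y => k (x1, y))); auto;
  intros t Ht; apply H; unfold on_boundary; simpl; auto.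
Qed.

Lemma rect_integral_bound g x0 x1 y0 y1 M : x0 <= x1 -> y0 <= y1 -> cont_on_boundary g x0 x1 y0 y1 ->
  (forall w, on_boundary x0 x1 y0 y1 w -> Cmod (g w) <= M) ->
  Cmod (rect_integral g x0 x1 y0 y1) <= 4 * M * ((x1 - x0) + (y1 - y0)).
Proof.
  intros Hx Hy Hg HM.
  destruct (boundary_integrable _ _ _ _ _ Hx Hy Hg) as (G1 & G2 & G3 & G4).
  assert (E1 : Cmod (hside g y0 x0 x1) <= 2 * (x1 - x0) * M).
  { apply seg_integral_bound; auto. intros; apply HM; unfold on_boundary; simpl; auto. }
  assert (E2 : Cmod (hside g y1 x0 x1) <= 2 * (x1 - x0) * M).
  { apply seg_integral_bound; auto. intros; apply HM; unfold on_boundary; simpl; auto. }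
  assert (E3 : Cmod (vside g x0 y0 y1) <= 2 * (y1 - y0) * M).
  { unfold vside. rewrite Cmod_mult, Cmod_Ci, Rmult_1_l.
    apply seg_integral_bound; auto. intros; apply HM; unfold on_boundary; simpl; auto. }
  assert (E4 : Cmod (vside g x1 y0 y1) <= 2 * (y1 - y0) * M).
  { unfold vside. rewrite Cmod_mult, Cmod_Ci, Rmult_1_l.
    apply seg_integral_bound; auto. intros; apply HM; unfold on_boundary; simpl; auto. }
  unfold rect_integral. eapply Rle_trans. apply Cmod_sub_le.
  eapply Rle_trans. apply Rplus_le_compat_r. apply Cmod_sub_le.
  eapply Rle_trans. apply Rplus_le_compat_r. apply Rplus_le_compat_r. apply Cmod_triangle.
  lra.
Qed.

Lemma RInt_affine p q a b : RInt (fun x => p + q * x) a b = p * (b - a) + q * (b * b - a * a) / 2.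
Proof.
  apply is_RInt_unique.
  assert (H := is_RInt_derive (V := R_CompleteNormedModule)
    (fun x => p * x + q * (x * x) / 2) (fun x => p + q * x) a b).
  replace (p * (b - a) + q * (b * b - a * a) / 2) with
    (minus ((fun x => p * x + q * (x * x) / 2) b) ((fun x => p * x + q * (x * x) / 2) a)).
  apply H.
  - intros x _. auto_derive; auto. field.
  - intros y _. apply continuity_pt_filterlim. apply continuity_pt_plus.
    apply continuity_pt_const. intros u v; auto.
    apply continuity_pt_scal. apply continuity_pt_id.
  - unfold minus, plus, opp; simpl. field.
Qed.

Lemma seg_integral_affine p1 q1 p2 q2 a b :
  seg_integral (fun t => (p1 + q1 * t, p2 + q2 * t)) a b =
  (p1 * (b - a) + q1 * (b * b - a * a) / 2, p2 * (b - a) + q2 * (b * b - a * a) / 2).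
Proof. unfold seg_integral; simpl. rewrite !RInt_affine. reflexivity. Qed.

Lemma rect_integral_affine (al be : C) x0 x1 y0 y1 : x0 <= x1 -> y0 <= y1 ->
  rect_integral (fun w => al + be * w)%C x0 x1 y0 y1 = 0%C.
Proof.
  intros Hx Hy. destruct al as [a1 a2]. destruct be as [b1 b2].
  unfold rect_integral, hside, vside.
  rewrite (seg_integral_ext (fun x => ((a1, a2) + (b1, b2) * (x, y0))%C)
             (fun t => ((a1 - b2 * y0) + b1 * t, (a2 + b1 * y0) + b2 * t))),
    (seg_integral_ext (fun x => ((a1, a2) + (b1, b2) * (x, y1))%C)
             (fun t => ((a1 - b2 * y1) + b1 * t, (a2 + b1 * y1) + b2 * t))),
    (seg_integral_ext (fun y => ((a1, a2) + (b1, b2) * (x0, y))%C)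
             (fun t => ((a1 + b1 * x0) + (- b2) * t, (a2 + b2 * x0) + b1 * t))),
    (seg_integral_ext (fun y => ((a1, a2) + (b1, b2) * (x1, y))%C)
             (fun t => ((a1 + b1 * x1) + (- b2) * t, (a2 + b2 * x1) + b1 * t)));
  auto; try (intros; apply injective_projections; simpl; ring).
  rewrite !seg_integral_affine. apply injective_projections; simpl; field.
Qed.

Record rect := mkR { ra : R; rb : R; rc : R; rd : R }.
Definition rect_int g (q : rect) := rect_integral g (ra q) (rb q) (rc q) (rd q).
Definition in_rect (q : rect) (w : C) := ra q <= fst w <= rb q /\ rc q <= snd w <= rd q.
Definition half_perimeter (q : rect) := (rb q - ra q) + (rd q - rc q).

Lemma on_boundary_in_rect q w : ra q <= rb q -> rc q <= rd q ->
  on_boundary (ra q) (rb q) (rc q) (rd q) w -> in_rect q w.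
Proof. intros H1 H2 [[A [B|B]]|[A [B|B]]]; unfold in_rect; rewrite B; lra. Qed.

Lemma in_rect_dist q w z : in_rect q w -> in_rect q z -> Cmod (w - z)%C <= half_perimeter q.
Proof.
  intros [[A1 A2] [A3 A4]] [[B1 B2] [B3 B4]]. eapply Rle_trans. apply Cmod_le_abs.
  unfold half_perimeter. simpl.
  assert (Rabs (fst w + - fst z) <= rb q - ra q) by (apply Rabs_le; lra).
  assert (Rabs (snd w + - snd z) <= rd q - rc q) by (apply Rabs_le; lra). lra.
Qed.

Lemma rect_integral_quarters g a b c d : a <= b -> c <= d ->
  (forall w, in_rect (mkR a b c d) w -> ccont g w) ->
  rect_integral g a b c d =
  (rect_integral g a ((a+b)/2) c ((c+d)/2) + rect_integral g ((a+b)/2) b c ((c+d)/2)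
   + rect_integral g a ((a+b)/2) ((c+d)/2) d + rect_integral g ((a+b)/2) b ((c+d)/2) d)%C.
Proof.
  intros Hab Hcd H. unfold in_rect in H; simpl in H.
  rewrite (rect_integral_split_x g a ((a+b)/2) b c d) by (try lra; intros; split; apply H; simpl; lra).
  rewrite (rect_integral_split_y g a ((a+b)/2) c ((c+d)/2) d) by (try lra; intros; split; apply H; simpl; lra).
  rewrite (rect_integral_split_y g ((a+b)/2) b c ((c+d)/2) d) by (try lra; intros; split; apply H; simpl; lra).
  ring.
Qed.

Definition quarter_select g (q : rect) : rect :=
  let a := ra q in let b := rb q in let c := rc q in let d := rd q in
  let m := (a + b) / 2 in let n := (c + d) / 2 in
  if Rle_dec (Cmod (rect_integral g a b c d) / 4) (Cmod (rect_integral g a m c n)) then mkR a m c n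
  else if Rle_dec (Cmod (rect_integral g a b c d) / 4) (Cmod (rect_integral g m b c n)) then mkR m b c n
  else if Rle_dec (Cmod (rect_integral g a b c d) / 4) (Cmod (rect_integral g a m n d)) then mkR a m n d
  else mkR m b n d.

Lemma quarter_select_spec g q : ra q <= rb q -> rc q <= rd q -> (forall w, in_rect q w -> ccont g w) ->
  let q' := quarter_select g q in
  ra q <= ra q' /\ rb q' <= rb q /\ rc q <= rc q' /\ rd q' <= rd q /\
  rb q' - ra q' = (rb q - ra q) / 2 /\ rd q' - rc q' = (rd q - rc q) / 2 /\
  Cmod (rect_int g q) / 4 <= Cmod (rect_int g q').
Proof.
  destruct q as [a b c d]; simpl. intros Hab Hcd H.
  pose proof (rect_integral_quarters g a b c d Hab Hcd H) as E.
  unfold quarter_select, rect_int; simpl.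
  destruct (Rle_dec (Cmod (rect_integral g a b c d) / 4)
              (Cmod (rect_integral g a ((a + b) / 2) c ((c + d) / 2)))); [simpl; repeat split; lra|].
  destruct (Rle_dec (Cmod (rect_integral g a b c d) / 4)
              (Cmod (rect_integral g ((a + b) / 2) b c ((c + d) / 2)))); [simpl; repeat split; lra|].
  destruct (Rle_dec (Cmod (rect_integral g a b c d) / 4)
              (Cmod (rect_integral g a ((a + b) / 2) ((c + d) / 2) d))); [simpl; repeat split; lra|].
  simpl. repeat split; try lra.
  set (X1 := rect_integral g a ((a + b) / 2) c ((c + d) / 2)) in *.
  set (X2 := rect_integral g ((a + b) / 2) b c ((c + d) / 2)) in *.
  set (X3 := rect_integral g a ((a + b) / 2) ((c + d) / 2) d) in *.
  set (X4 := rect_integral g ((a + b) / 2) b ((c + d) / 2) d) in *.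
  rewrite E in *.
  pose proof (Cmod_triangle (X1 + X2 + X3) X4).
  pose proof (Cmod_triangle (X1 + X2) X3).
  pose proof (Cmod_triangle X1 X2).
  lra.
Qed.

Definition nested_rects g q (n : nat) : rect := Nat.iter n (quarter_select g) q.

Lemma pow2_gt n : INR n < 2 ^ n.
Proof.
  induction n. simpl; lra. rewrite S_INR. rewrite <- tech_pow_Rmult.
  assert (1 <= 2 ^ n) by (apply pow_R1_Rle; lra). lra.
Qed.

Lemma small_pow2 K d : 0 < d -> exists n, K / 2 ^ n < d.
Proof.
  intros Hd. destruct (INR_unbounded (Rabs (K / d))) as [n Hn].
  exists n. pose proof (pow2_gt n) as P1. pose proof (pow_lt 2 n ltac:(lra)) as P2.
  apply Rcomplements.Rlt_div_l; auto.
  pose proof (Rle_abs (K / d)) as P3.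
  assert (P4 : K / d < 2 ^ n) by lra.
  apply Rcomplements.Rlt_div_l in P4; auto. lra.
Qed.

Section NestedRectangles.
Variable g : C -> C.
Variable Q : rect.
Hypothesis Hab : ra Q <= rb Q.
Hypothesis Hcd : rc Q <= rd Q.
Hypothesis Hc : forall w, in_rect Q w -> ccont g w.

Lemma nested_rects_spec n :
  ra Q <= ra (nested_rects g Q n) /\ ra (nested_rects g Q n) <= rb (nested_rects g Q n) /\
  rb (nested_rects g Q n) <= rb Q /\
  rc Q <= rc (nested_rects g Q n) /\ rc (nested_rects g Q n) <= rd (nested_rects g Q n) /\
  rd (nested_rects g Q n) <= rd Q /\
  rb (nested_rects g Q n) - ra (nested_rects g Q n) = (rb Q - ra Q) / 2 ^ n /\
  rd (nested_rects g Q n) - rc (nested_rects g Q n) = (rd Q - rc Q) / 2 ^ n /\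
  Cmod (rect_int g Q) <= 4 ^ n * Cmod (rect_int g (nested_rects g Q n)).
Proof.
  induction n.
  - simpl. repeat split; lra.
  - destruct IHn as (I1 & I2 & I3 & I4 & I5 & I6 & I7 & I8 & I9).
    assert (Hcn : forall w, in_rect (nested_rects g Q n) w -> ccont g w).
    { intros w [Hw1 Hw2]. apply Hc. split; lra. }
    pose proof (quarter_select_spec g (nested_rects g Q n) I2 I5 Hcn) as (S1 & S2 & S3 & S4 & S5 & S6 & S7).
    change (nested_rects g Q (S n)) with (quarter_select g (nested_rects g Q n)).
    pose proof (pow_lt 2 n ltac:(lra)).
    rewrite <- !tech_pow_Rmult.
    repeat split; try lra.
    + rewrite S5, I7. field. lra.
    + rewrite S6, I8. field. lra.
    + pose proof (pow_lt 4 n ltac:(lra)). nra.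
Qed.

Lemma nested_rects_mono n m : (n <= m)%nat ->
  ra (nested_rects g Q n) <= ra (nested_rects g Q m) /\ rb (nested_rects g Q m) <= rb (nested_rects g Q n) /\
  rc (nested_rects g Q n) <= rc (nested_rects g Q m) /\ rd (nested_rects g Q m) <= rd (nested_rects g Q n).
Proof.
  induction 1. repeat split; lra.
  destruct (nested_rects_spec m) as (I1 & I2 & I3 & I4 & I5 & I6 & _).
  assert (Hcn : forall w, in_rect (nested_rects g Q m) w -> ccont g w).
  { intros w [Hw1 Hw2]. apply Hc. split; lra. }
  pose proof (quarter_select_spec g (nested_rects g Q m) I2 I5 Hcn) as (S1 & S2 & S3 & S4 & _).
  change (nested_rects g Q (S m)) with (quarter_select g (nested_rects g Q m)). lra.
Qed.

Lemma nested_rects_cross n m :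
  ra (nested_rects g Q m) <= rb (nested_rects g Q n) /\ rc (nested_rects g Q m) <= rd (nested_rects g Q n).
Proof.
  destruct (nested_rects_mono n (max n m) ltac:(lia)) as (A1 & A2 & A3 & A4).
  destruct (nested_rects_mono m (max n m) ltac:(lia)) as (B1 & B2 & B3 & B4).
  destruct (nested_rects_spec (max n m)) as (_ & C2 & _ & _ & C5 & _). lra.
Qed.

(* Completeness of R: the nested rectangles share a common point
   (the supremum of their lower-left corners). *)
Lemma nested_rects_common_point : exists z, forall n, in_rect (nested_rects g Q n) z.
Proof.
  destruct (completeness (fun x => exists n, x = ra (nested_rects g Q n))) as [X [HX1 HX2]].
  { exists (rb Q). intros x [n ->]. destruct (nested_rects_spec n) as (_ & _ & I3 & _).
    pose proof (nested_rects_cross n n). lra. }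
  { exists (ra (nested_rects g Q 0)). exists 0%nat. auto. }
  destruct (completeness (fun x => exists n, x = rc (nested_rects g Q n))) as [Y [HY1 HY2]].
  { exists (rd Q). intros x [n ->]. destruct (nested_rects_spec n) as (_ & _ & _ & _ & I5 & I6 & _). lra. }
  { exists (rc (nested_rects g Q 0)). exists 0%nat. auto. }
  exists (X, Y). intros n. split; simpl; split.
  - apply HX1. exists n; auto.
  - apply HX2. intros x [m ->]. apply nested_rects_cross.
  - apply HY1. exists n; auto.
  - apply HY2. intros x [m ->]. apply nested_rects_cross.
Qed.
End NestedRectangles.

(* On a small rectangle around a point [z] where [g] is differentiable, [g]
   is affine up to [eps |w - z|]; affine functions integrate to zero, so the
   contour integral is at most [4 eps s^2], [s] the half-perimeter. *)
Lemma rect_integral_near_affine g q z l eps delta :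
  ra q <= rb q -> rc q <= rd q -> 0 <= eps -> in_rect q z ->
  (forall w, in_rect q w -> cdiff g w) ->
  (forall h, Cmod h < delta -> Cmod (g (z + h) - g z - l * h)%C <= eps * Cmod h) ->
  half_perimeter q < delta ->
  Cmod (rect_int g q) <= 4 * (eps * half_perimeter q) * half_perimeter q.
Proof.
  intros Hab Hcd Heps Hz HD Hh Hsmall.
  set (al := (g z - l * z)%C).
  set (r := fun w => (g w - (al + l * w))%C).
  assert (Hr : forall w, in_rect q w -> Cmod (r w) <= eps * half_perimeter q).
  { intros w Hw. pose proof (in_rect_dist q w z Hw Hz) as Hdist.
    specialize (Hh (w - z)%C ltac:(lra)). replace (z + (w - z))%C with w in Hh by ring.
    unfold r, al. replace (g w - (g z - l * z + l * w))%C with (g w - g z - l * (w - z))%C by ring.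
    eapply Rle_trans. apply Hh. apply Rmult_le_compat_l; lra. }
  assert (Haff : forall w, cdiff (fun w => al + l * w)%C w).
  { intros w. apply cdiff_add. apply cdiff_const. apply cdiff_scal. apply cdiff_id. }
  assert (Bdr : cont_on_boundary r (ra q) (rb q) (rc q) (rd q)).
  { intros w Hw. apply cdiff_ccont. unfold r. apply cdiff_sub; auto.
    apply HD. apply on_boundary_in_rect; auto. }
  unfold rect_int.
  rewrite (rect_integral_ext g (fun w => (al + l * w) + r w)%C) by (auto; intros; unfold r; ring).
  rewrite rect_integral_plus by (auto; intros w _; apply cdiff_ccont; auto).
  rewrite rect_integral_affine, Cplus_0_l by auto.
  apply rect_integral_bound; auto. intros w Hw. apply Hr. apply on_boundary_in_rect; auto.
Qed.

(* By bisection, |I(Q)| <= 4^n |I(Q_n)|, and on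
   the n-th rectangle the previous estimate gives 4^n |I(Q_n)| <= 4 eps s^2. *)
Theorem goursat g a b c d : a <= b -> c <= d ->
  (forall w, in_rect (mkR a b c d) w -> cdiff g w) -> rect_integral g a b c d = 0%C.
Proof.
  intros Hab Hcd HD. set (Q := mkR a b c d).
  assert (Hc : forall w, in_rect Q w -> ccont g w) by (intros; apply cdiff_ccont; auto).
  destruct (nested_rects_common_point g Q Hab Hcd Hc) as [z Hz].
  destruct (HD z (Hz 0%nat)) as [l Hl].
  set (s0 := half_perimeter Q).
  apply Cmod_eq_0. apply (le_eps_eq0 _ (4 * s0 ^ 2) 1). apply Cmod_ge_0.
  { unfold s0, half_perimeter, Q; simpl. nra. } lra.
  intros eps Heps.
  destruct (Hl eps ltac:(lra)) as [delta [Hdelta Hh]].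
  destruct (small_pow2 s0 delta Hdelta) as [n Hn].
  destruct (nested_rects_spec g Q Hab Hcd Hc n) as (I1 & I2 & I3 & I4 & I5 & I6 & I7 & I8 & I9).
  set (qn := nested_rects g Q n) in *.
  pose proof (pow_lt 2 n ltac:(lra)) as P2.
  assert (Hsn : half_perimeter qn = s0 / 2 ^ n)
    by (unfold s0, half_perimeter; rewrite I7, I8; field; lra).
  assert (Bn : Cmod (rect_int g qn) <= 4 * (eps * half_perimeter qn) * half_perimeter qn).
  { apply (rect_integral_near_affine g qn z l eps delta); auto; try lra. apply Hz.
    intros w [[A1 A2] [A3 A4]]. apply HD. unfold in_rect, Q in *; simpl in *. repeat split; lra. }
  change (rect_integral g a b c d) with (rect_int g Q).
  eapply Rle_trans. apply I9.
  assert (E4 : 4 ^ n = 2 ^ n * 2 ^ n) by (rewrite <- Rpow_mult_distr; f_equal; lra).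
  apply Rle_trans with (4 ^ n * (4 * (eps * half_perimeter qn) * half_perimeter qn)).
  { apply Rmult_le_compat_l; auto. apply pow_le; lra. }
  right. rewrite E4, Hsn. field. lra.
Qed.

(* The two real integrals arising from [1 / (w - u)] along a side of a square. *)
Lemma RInt_atan k u0 e : 0 < e ->
  RInt (fun x => k / ((x - u0) ^ 2 + e ^ 2)) (u0 - e) (u0 + e) = k * PI / (2 * e).
Proof.
  intros He. apply is_RInt_unique.
  set (F := fun x => k / e * atan ((x - u0) / e)).
  replace (k * PI / (2 * e)) with (minus (F (u0 + e)) (F (u0 - e))).
  apply (is_RInt_derive (V := R_CompleteNormedModule)).
  - intros x _. unfold F. auto_derive; auto.
    assert (0 < (x - u0) ^ 2 + e ^ 2) by (pose proof (pow2_ge_0 (x - u0)); pose proof (pow_lt e 2 He); lra).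
    field; repeat split; try lra; intro Hc; nra.
  - intros x _. apply (ex_derive_continuous (K := R_AbsRing) (V := R_NormedModule)). auto_derive.
    pose proof (pow2_ge_0 (x - u0)). pose proof (pow_lt e 2 He). nra.
  - unfold F, minus, plus, opp; simpl.
    replace ((u0 + e - u0) / e) with 1 by (field; lra).
    replace ((u0 - e - u0) / e) with (Ropp 1) by (field; lra).
    rewrite atan_opp, atan_1. field. lra.
Qed.

Lemma RInt_log k u0 e : 0 < e ->
  RInt (fun x => k * (x - u0) / ((x - u0) ^ 2 + e ^ 2)) (u0 - e) (u0 + e) = 0.
Proof.
  intros He. apply is_RInt_unique.
  set (F := fun x => k * ln ((x - u0) ^ 2 + e ^ 2) / 2).
  replace 0 with (minus (F (u0 + e)) (F (u0 - e))).
  apply (is_RInt_derive (V := R_CompleteNormedModule)).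
  - intros x _. unfold F. auto_derive.
    pose proof (pow2_ge_0 (x - u0)). pose proof (pow_lt e 2 He). nra.
    field. pose proof (pow2_ge_0 (x - u0)). pose proof (pow_lt e 2 He). nra.
  - intros x _. apply (ex_derive_continuous (K := R_AbsRing) (V := R_NormedModule)). auto_derive.
    pose proof (pow2_ge_0 (x - u0)). pose proof (pow_lt e 2 He). nra.
  - unfold F, minus, plus, opp; simpl.
    replace (u0 + e - u0) with e by ring. replace (u0 - e - u0) with (- e) by ring.
    replace (- e * (- e * 1) + e * (e * 1)) with (e * (e * 1) + e * (e * 1)) by ring. ring.
Qed.

Definition two_pi_i : C := (0, 2 * PI).

Lemma two_pi_i_neq0 : two_pi_i <> RtoC 0.
Proof. unfold two_pi_i. intro E. injection E as E. pose proof PI_RGT_0. lra. Qed.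

(* Componentwise evaluation of [1 / (w - u)] on the sides of a square. *)
Ltac side_inverse := intros; apply injective_projections; simpl; field; repeat split;
  let Hc := fresh in intro Hc;
  first [ apply Rplus_sqr_eq_0 in Hc; lra | nra |
    (match type of Hc with ?a * (?a * 1) + ?b * (?b * 1) = 0 =>
       rewrite !Rmult_1_r in Hc; apply Rplus_sqr_eq_0 in Hc; lra end) ].

Lemma square_integral_inv u e : 0 < e ->
  rect_integral (fun w => / (w - u))%C (fst u - e) (fst u + e) (snd u - e) (snd u + e) = two_pi_i.
Proof.
  intros He. destruct u as [ux uy]. simpl. unfold rect_integral, hside, vside.
  rewrite (seg_integral_ext (fun x => / ((x, (uy - e)%R) - (ux, uy)))%C
     (fun t => (1 * (t - ux) / ((t - ux) ^ 2 + e ^ 2), e / ((t - ux) ^ 2 + e ^ 2)))) by (try lra; side_inverse).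
  rewrite (seg_integral_ext (fun x => / ((x, (uy + e)%R) - (ux, uy)))%C
     (fun t => (1 * (t - ux) / ((t - ux) ^ 2 + e ^ 2), (- e) / ((t - ux) ^ 2 + e ^ 2)))) by (try lra; side_inverse).
  rewrite (seg_integral_ext (fun y => / (((ux - e)%R, y) - (ux, uy)))%C
     (fun t => ((- e) / ((t - uy) ^ 2 + e ^ 2), (-1) * (t - uy) / ((t - uy) ^ 2 + e ^ 2)))) by (try lra; side_inverse).
  rewrite (seg_integral_ext (fun y => / (((ux + e)%R, y) - (ux, uy)))%C
     (fun t => (e / ((t - uy) ^ 2 + e ^ 2), (-1) * (t - uy) / ((t - uy) ^ 2 + e ^ 2)))) by (try lra; side_inverse).
  unfold seg_integral; cbn [fst snd]. rewrite !RInt_log, !RInt_atan by lra.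
  unfold two_pi_i. apply injective_projections; simpl; field; lra.
Qed.

(* Excision: if [g] is differentiable except at [u], its contour integral
   over a rectangle equals that over any square around [u] inside it, since
   the difference is a sum of four rectangles avoiding [u] (Goursat). *)
Lemma rect_integral_excise g a b c d u e :
  (forall w, w <> u -> cdiff g w) ->
  a < fst u - e -> fst u + e < b -> c < snd u - e -> snd u + e < d -> 0 < e ->
  rect_integral g a b c d = rect_integral g (fst u - e) (fst u + e) (snd u - e) (snd u + e).
Proof.
  intros HD H1 H2 H3 H4 He. destruct u as [ux uy]; simpl in *.
  assert (HC : forall w, w <> (ux, uy) -> ccont g w) by (intros; apply cdiff_ccont; auto).
  rewrite (rect_integral_split_x g a (ux - e) b c d)
    by (try lra; intros; split; apply HC; apply neq_snd; simpl; lra).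
  rewrite (rect_integral_split_x g (ux - e) (ux + e) b c d)
    by (try lra; intros; split; apply HC; apply neq_snd; simpl; lra).
  rewrite (rect_integral_split_y g (ux - e) (ux + e) c (uy - e) d)
    by (try lra; intros; split; apply HC; apply neq_fst; simpl; lra).
  rewrite (rect_integral_split_y g (ux - e) (ux + e) (uy - e) (uy + e) d)
    by (try lra; intros; split; apply HC; apply neq_fst; simpl; lra).
  rewrite (goursat g a (ux - e) c d), (goursat g (ux + e) b c d)
    by (try lra; intros w [Hw1 Hw2]; simpl in *; apply HD; apply neq_fst; simpl; lra).
  rewrite (goursat g (ux - e) (ux + e) c (uy - e)), (goursat g (ux - e) (ux + e) (uy + e) d)
    by (try lra; intros w [Hw1 Hw2]; simpl in *; apply HD; apply neq_snd; simpl; lra).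
  ring.
Qed.

Lemma square_boundary_point u e w : 0 < e ->
  on_boundary (fst u - e) (fst u + e) (snd u - e) (snd u + e) w ->
  w <> u /\ Cmod (w - u)%C <= 2 * e.
Proof.
  intros He Hw. split.
  - destruct Hw as [[A [B|B]]|[A [B|B]]]; [apply neq_snd|apply neq_snd|apply neq_fst|apply neq_fst]; lra.
  - eapply Rle_trans. apply Cmod_le_abs. simpl.
    assert (Rabs (fst w + - fst u) <= e /\ Rabs (snd w + - snd u) <= e) as [X Y].
    { destruct Hw as [[A [B|B]]|[A [B|B]]]; rewrite B; split; apply Rabs_le; lra. }
    lra.
Qed.

Lemma square_integral_diff_quotient f u K dl e : (forall z, cdiff f z) -> 0 <= K -> 0 < e -> 2 * e < dl ->
  (forall h, Cmod h < dl -> Cmod (f (u + h) - f u)%C <= K * Cmod h) ->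
  Cmod (rect_integral (fun w => (f w - f u) * / (w - u))%C (fst u - e) (fst u + e) (snd u - e) (snd u + e))
    <= 16 * K * e.
Proof.
  intros Hf HK He Hdl Hlip.
  replace (16 * K * e) with (4 * K * ((fst u + e - (fst u - e)) + (snd u + e - (snd u - e)))) by ring.
  apply rect_integral_bound; try lra.
  - intros w Hw. destruct (square_boundary_point u e w He Hw) as [Hne _].
    apply cdiff_ccont. apply cdiff_mul. apply cdiff_sub; auto. apply cdiff_const.
    apply cdiff_inv_lin; auto.
  - intros w Hw. destruct (square_boundary_point u e w He Hw) as [Hne Hd].
    assert (Hnz := Cminus_neq0 _ _ Hne).
    assert (Hpos : 0 < Cmod (w - u)%C) by (apply Cmod_gt_0; auto).
    rewrite Cmod_mult, Cmod_inv by auto.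
    specialize (Hlip (w - u)%C ltac:(lra)). replace (u + (w - u))%C with w in Hlip by ring.
    apply (Rmult_le_compat_r (/ Cmod (w - u)%C)) in Hlip; [|left; apply Rinv_0_lt_compat; auto].
    eapply Rle_trans. apply Hlip. right. field. lra.
Qed.

(* Cauchy's integral formula for a rectangle containing [u] in its interior:
   after excision to a square of half-side [eps] around [u], the integrand is
   [f u / (w - u)] (integral [f u * 2 pi i]) plus a difference quotient
   (integral [O(eps)]). *)
Theorem cauchy_formula f a b c d u : (forall z, cdiff f z) -> a < fst u < b -> c < snd u < d ->
  rect_integral (fun w => f w * / (w - u))%C a b c d = (f u * two_pi_i)%C.
Proof.
  intros Hf Hx Hy.
  destruct (Hf u) as [l Hl]. destruct (has_cderiv_lipschitz _ _ _ Hl) as [dl [Hdl Hlip]].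
  pose proof (Cmod_ge_0 l) as Hl0.
  set (e0 := Rmin (Rmin (fst u - a) (b - fst u)) (Rmin (Rmin (snd u - c) (d - snd u)) (dl / 4))).
  assert (He0 : 0 < e0) by (unfold e0; repeat apply Rmin_pos; lra).
  set (g := fun w => (f w * / (w - u))%C).
  set (h := fun w => ((f w - f u) * / (w - u))%C).
  assert (Hg : forall w, w <> u -> cdiff g w).
  { intros w Hw. apply cdiff_mul; auto. apply cdiff_inv_lin; auto. }
  assert (E : Cmod (rect_integral g a b c d - f u * two_pi_i)%C = 0).
  { apply (le_eps_eq0 _ (16 * (Cmod l + 1)) e0); auto using Cmod_ge_0; try lra.
    intros eps [Heps He].
    unfold e0 in He. apply Rmin_Rgt_l in He as [He1 He2]. apply Rmin_Rgt_l in He1 as [Ha Hb].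
    apply Rmin_Rgt_l in He2 as [He2 Hd]. apply Rmin_Rgt_l in He2 as [Hc Hd'].
    rewrite (rect_integral_excise g a b c d u eps) by (auto; lra).
    assert (Hinv : cont_on_boundary (fun w => / (w - u))%C (fst u - eps) (fst u + eps) (snd u - eps) (snd u + eps)).
    { intros w Hw. apply cdiff_ccont, cdiff_inv_lin. eapply square_boundary_point; eauto. }
    assert (Hh : cont_on_boundary h (fst u - eps) (fst u + eps) (snd u - eps) (snd u + eps)).
    { intros w Hw. apply cdiff_ccont, cdiff_mul. apply cdiff_sub; auto. apply cdiff_const.
      apply cdiff_inv_lin. eapply square_boundary_point; eauto. }
    rewrite (rect_integral_ext g (fun w => f u * / (w - u) + h w)%C) by (try lra; intros; unfold g, h; ring).
    rewrite rect_integral_plus, rect_integral_scal, square_integral_inv; auto; try lra.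
    2: { intros w Hw. apply cdiff_ccont, cdiff_scal, cdiff_inv_lin. eapply square_boundary_point; eauto. }
    replace (f u * two_pi_i + _ - f u * two_pi_i)%C
      with (rect_integral h (fst u - eps) (fst u + eps) (snd u - eps) (snd u + eps)) by ring.
    replace (eps * (16 * (Cmod l + 1))) with (16 * (Cmod l + 1) * eps) by ring.
    apply (square_integral_diff_quotient f u (Cmod l + 1) dl); auto; lra. }
  apply Cmod_eq_0 in E.
  replace (rect_integral g a b c d) with ((rect_integral g a b c d - f u * two_pi_i) + f u * two_pi_i)%C by ring.
  rewrite E. ring.
Qed.

Lemma peval_nil z : peval nil z = RtoC 0.
Proof. reflexivity. Qed.
Lemma peval_cons a q z : peval (a :: q) z = (a + z * peval q z)%C.
Proof. reflexivity. Qed.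
Lemma coef_nil k : coef nil k = C0.
Proof. destruct k; reflexivity. Qed.
Lemma coef_cons0 a q : coef (a :: q) 0 = a.
Proof. reflexivity. Qed.
Lemma coef_consS a q k : coef (a :: q) (S k) = coef q k.
Proof. reflexivity. Qed.

Fixpoint padd (p q : Cpoly) : Cpoly :=
  match p, q with
  | nil, _ => q
  | _, nil => p
  | a :: p', b :: q' => (a + b)%C :: padd p' q'
  end.
Definition pscale (a : C) (p : Cpoly) : Cpoly := map (fun x => a * x)%C p.
Fixpoint pmul (p q : Cpoly) : Cpoly :=
  match p with
  | nil => nil
  | a :: p' => padd (pscale a q) (C0 :: pmul p' q)
  end.

Lemma peval_padd p q z : peval (padd p q) z = (peval p z + peval q z)%C.
Proof.
  revert q. induction p as [|a p IH]; intros [|b q]; simpl padd;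
  rewrite ?peval_nil, ?peval_cons; try cring.
  rewrite IH. cring.
Qed.

Lemma peval_pscale a p z : peval (pscale a p) z = (a * peval p z)%C.
Proof.
  induction p as [|b p IH]; simpl pscale; rewrite ?peval_nil, ?peval_cons. cring.
  rewrite IH. cring.
Qed.

Lemma peval_pmul p q z : peval (pmul p q) z = (peval p z * peval q z)%C.
Proof.
  induction p as [|a p IH]; simpl pmul; rewrite ?peval_nil, ?peval_cons. cring.
  rewrite peval_padd, peval_pscale, peval_cons, IH. cring.
Qed.

Lemma coef_padd p q k : coef (padd p q) k = (coef p k + coef q k)%C.
Proof.
  revert q k. induction p as [|a p IH]; intros [|b q] k; simpl padd.
  - rewrite !coef_nil. cring.
  - rewrite coef_nil. cring.
  - rewrite coef_nil. cring.
  - destruct k. rewrite !coef_cons0. reflexivity. rewrite !coef_consS. apply IH.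
Qed.

Lemma coef_pscale a p k : coef (pscale a p) k = (a * coef p k)%C.
Proof.
  revert k. induction p as [|b p IH]; intros k; simpl.
  - rewrite !coef_nil. cring.
  - destruct k. reflexivity. rewrite !coef_consS. apply IH.
Qed.

Definition PolyFun (g : C -> C) : Prop := exists p : Cpoly, forall z, g z = peval p z.

Lemma PF_ext g k : PolyFun g -> (forall z, g z = k z) -> PolyFun k.
Proof. intros [p Hp] E. exists p. intros. rewrite <- E. auto. Qed.
Lemma PF_const c : PolyFun (fun _ => c).
Proof. exists (c :: nil). intros. rewrite peval_cons, peval_nil. cring. Qed.
Lemma PF_id : PolyFun (fun z => z).
Proof.
  exists (C0 :: Defs.C1 :: nil). intros. rewrite !peval_cons, peval_nil.
  unfold Defs.C1. change (1, 0) with (RtoC 1). cring.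
Qed.
Lemma PF_add g k : PolyFun g -> PolyFun k -> PolyFun (fun z => g z + k z)%C.
Proof. intros [p Hp] [q Hq]. exists (padd p q). intros. rewrite peval_padd, Hp, Hq. auto. Qed.
Lemma PF_mul g k : PolyFun g -> PolyFun k -> PolyFun (fun z => g z * k z)%C.
Proof. intros [p Hp] [q Hq]. exists (pmul p q). intros. rewrite peval_pmul, Hp, Hq. auto. Qed.

Lemma Csum_S n F : Csum (S n) F = (Csum n F + F n)%C.
Proof. reflexivity. Qed.
Lemma Csum_0 F : Csum 0 F = RtoC 0.
Proof. reflexivity. Qed.

Lemma Csum_ext n (F G : nat -> C) : (forall k, (k < n)%nat -> F k = G k) -> Csum n F = Csum n G.
Proof. induction n; intros H. reflexivity. rewrite !Csum_S, IHn, H; auto. Qed.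

Lemma Csum_scal (c : C) n (F : nat -> C) : Csum n (fun k => c * F k)%C = (c * Csum n F)%C.
Proof. induction n. rewrite !Csum_0. cring. rewrite !Csum_S, IHn. cring. Qed.

Lemma Csum_scal_r n (F : nat -> C) (c : C) : Csum n (fun k => F k * c)%C = (Csum n F * c)%C.
Proof. induction n. rewrite !Csum_0. cring. rewrite !Csum_S, IHn. cring. Qed.

Lemma Csum_minus n (F G : nat -> C) : Csum n (fun k => F k - G k)%C = (Csum n F - Csum n G)%C.
Proof. induction n. rewrite !Csum_0. cring. rewrite !Csum_S, IHn. cring. Qed.

Lemma Csum_zero n (F : nat -> C) : (forall k, (k < n)%nat -> F k = RtoC 0) -> Csum n F = RtoC 0.
Proof. induction n; intros H. reflexivity. rewrite Csum_S, IHn, H; auto. cring. Qed.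

Lemma Csum_tail n N (F : nat -> C) : (n <= N)%nat ->
  (forall k, (n <= k < N)%nat -> F k = RtoC 0) -> Csum N F = Csum n F.
Proof.
  induction 1 as [|N Hle IH]; intros HF. reflexivity.
  rewrite Csum_S, IH, HF. cring. lia. intros; apply HF; lia.
Qed.

Lemma Csum_shift n (F : nat -> C) : Csum (S n) F = (F 0%nat + Csum n (fun i => F (S i)))%C.
Proof.
  induction n. rewrite Csum_S, !Csum_0. cring.
  rewrite Csum_S, IHn, (Csum_S n (fun i => F (S i))). cring.
Qed.

Lemma PF_Csum n (F : nat -> C -> C) : (forall k, PolyFun (F k)) -> PolyFun (fun z => Csum n (fun k => F k z)).
Proof.
  intros H. induction n. eapply PF_ext. apply (PF_const (RtoC 0)). intros; reflexivity.
  eapply PF_ext. apply PF_add. apply IHn. apply H. intros. rewrite Csum_S. auto.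
Qed.

Lemma peval_map_seq (g : nat -> C) n : forall s z,
  peval (map g (seq s n)) z = Csum n (fun i => g (s + i)%nat * Defs.Cpow z i)%C.
Proof.
  induction n; intros s z. reflexivity.
  simpl seq. simpl map. rewrite peval_cons, IHn, Csum_shift, Nat.add_0_r. rewrite <- Csum_scal.
  change (Defs.Cpow z 0) with (RtoC 1).
  rewrite (Csum_ext _ (fun k => z * (g (S s + k)%nat * Defs.Cpow z k))%C
             (fun i => g (s + S i)%nat * Defs.Cpow z (S i))%C).
  cring. intros k _. replace (s + S k)%nat with (S s + k)%nat by lia. simpl Defs.Cpow. cring.
Qed.

Lemma coef_map_seq (g : nat -> C) n i : (i < n)%nat -> coef (map g (seq 0 n)) i = g i.
Proof.
  intros H. unfold coef. rewrite (nth_indep _ _ (g 0%nat)).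
  rewrite map_nth, seq_nth; auto.
  rewrite length_map, length_seq. auto.
Qed.

Lemma peval_zero_coefs q : (forall k, coef q k = C0) -> forall z, peval q z = RtoC 0.
Proof.
  induction q as [|a q IH]; intros H z. reflexivity.
  rewrite peval_cons. pose proof (H 0%nat) as H0. rewrite coef_cons0 in H0. rewrite H0, IH.
  cring. intros k. rewrite <- (coef_consS a q k). apply H.
Qed.

Lemma pow_ge1 x n : 1 <= x -> 1 <= x ^ n.
Proof. intros H. induction n. simpl; lra. simpl. nra. Qed.

Lemma horner_lower_bound (a X Y : C) c m : 0 < c -> 1 <= Cmod Y ->
  c * Cmod Y ^ m <= Cmod X -> Cmod a <= c / 2 * Cmod Y ->
  c / 2 * Cmod Y ^ (S m) <= Cmod (a + Y * X)%C.
Proof.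
  intros Hc HY HX Ha.
  pose proof (Cmod_tri_sub (Y * X)%C (- a)%C) as T.
  rewrite Cmod_opp, Cmod_mult in T.
  replace (Y * X - - a)%C with (a + Y * X)%C in T by ring.
  pose proof (pow_ge1 (Cmod Y) m HY).
  assert (Cmod Y * (c * Cmod Y ^ m) <= Cmod Y * Cmod X) by (apply Rmult_le_compat_l; lra).
  assert (c * Cmod Y <= c * (Cmod Y * Cmod Y ^ m)) by (apply Rmult_le_compat_l; nra).
  simpl. nra.
Qed.

Lemma peval_lower_bound p k : coef p k <> C0 -> exists c e R0, 0 < c /\ 0 < R0 /\ (k <= e)%nat /\
  forall z, R0 <= Cmod z -> c * Cmod z ^ e <= Cmod (peval p z).
Proof.
  revert k. induction p as [|a q IH]; intros k Hk.
  - rewrite coef_nil in Hk. congruence.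
  - destruct (classic (exists k', coef q k' <> C0)) as [[k' Hk']|Hno].
    + set (k'' := match k with O => k' | S j => j end).
      assert (Hk'' : coef q k'' <> C0) by (unfold k''; destruct k; auto).
      destruct (IH k'' Hk'') as [c [e [R0 [Hc [HR0 [Hke Hb]]]]]].
      pose proof (Cmod_ge_0 a) as Ha.
      pose proof (Rmax_l (Rmax R0 1) (2 * Cmod a / c)). pose proof (Rmax_r (Rmax R0 1) (2 * Cmod a / c)).
      pose proof (Rmax_l R0 1). pose proof (Rmax_r R0 1).
      set (R1 := Rmax (Rmax R0 1) (2 * Cmod a / c)) in *.
      exists (c / 2), (S e), R1. repeat split; try lra.
      { destruct k; unfold k'' in Hke; lia. }
      intros z Hz. rewrite peval_cons. apply horner_lower_bound; try lra.
      { apply Hb. lra. }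
      replace (c / 2 * Cmod z) with (c * Cmod z / 2) by field.
      assert (Hza : 2 * Cmod a / c * c <= Cmod z * c) by (apply Rmult_le_compat_r; lra).
      replace (2 * Cmod a / c * c) with (2 * Cmod a) in Hza by (field; lra). lra.
    + assert (Hq : forall k', coef q k' = C0)
        by (intros k'; destruct (classic (coef q k' = C0)); auto; exfalso; apply Hno; eauto).
      destruct k as [|k]. 2: { rewrite coef_consS in Hk. congruence. }
      rewrite coef_cons0 in Hk.
      exists (Cmod a), 0%nat, 1. repeat split; try lra; try lia.
      { apply Cmod_gt_0. intro E; apply Hk; rewrite E; reflexivity. }
      intros z _. rewrite peval_cons, (peval_zero_coefs q Hq), pow_O, Rmult_1_r, Cmult_0_r, Cplus_0_r. lra.
Qed.

Lemma peval_upper_bound p : exists B, 0 <= B /\ forall z, Cmod (peval p z) <= B * (1 + Cmod z) ^ length p.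
Proof.
  induction p as [|a q [B [HB Hb]]].
  - exists 0. split; [lra|]. intros z. rewrite peval_nil, Cmod_0. simpl. lra.
  - exists (Cmod a + B). split. pose proof (Cmod_ge_0 a); lra.
    intros z. rewrite peval_cons. simpl length.
    eapply Rle_trans. apply Cmod_triangle. rewrite Cmod_mult.
    pose proof (Cmod_ge_0 z). pose proof (Cmod_ge_0 a).
    pose proof (pow_ge1 (1 + Cmod z) (length q) ltac:(lra)).
    specialize (Hb z). simpl.
    assert (Cmod z * Cmod (peval q z) <= (1 + Cmod z) * (B * (1 + Cmod z) ^ length q)).
    { apply Rmult_le_compat; try lra; apply Cmod_ge_0. }
    set (X := (1 + Cmod z) ^ length q) in *.
    assert (H4 : 1 <= (1 + Cmod z) * X) by nra.
    assert (H5 : Cmod a <= Cmod a * ((1 + Cmod z) * X)) by nra.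
    replace ((Cmod a + B) * ((1 + Cmod z) * X)) with (Cmod a * ((1 + Cmod z) * X) + (1 + Cmod z) * (B * X)) by ring.
    lra.
Qed.

Lemma peval_zero_fun p : (forall z, peval p z = RtoC 0) -> forall k, coef p k = C0.
Proof.
  intros H k. destruct (classic (coef p k = C0)) as [E|E]; auto. exfalso.
  destruct (peval_lower_bound p k E) as [c [e [R0 [Hc [HR0 [_ Hb]]]]]].
  specialize (Hb (RtoC R0)). rewrite Cmod_R, Rabs_pos_eq in Hb by lra.
  specialize (Hb (Rle_refl _)). rewrite H, Cmod_0 in Hb.
  pose proof (pow_lt R0 e HR0). nra.
Qed.

Definition poly_growth (g : C -> C) : Prop :=
  exists Cc M R0, 0 <= Cc /\ forall w, R0 <= Cmod w -> Cmod (g w) <= Cc * Cmod w ^ M.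

Lemma peval_poly_growth p : poly_growth (peval p).
Proof.
  destruct (peval_upper_bound p) as [B [HB Hub]].
  pose proof (pow_lt 2 (length p) ltac:(lra)).
  exists (B * 2 ^ length p), (length p), 1. split. nra.
  intros w Hw. eapply Rle_trans. apply Hub. rewrite Rmult_assoc, <- Rpow_mult_distr.
  apply Rmult_le_compat_l; auto. apply pow_incr. pose proof (Cmod_ge_0 w). lra.
Qed.

Lemma poly_growth_sub g k : poly_growth g -> poly_growth k -> poly_growth (fun w => g w - k w)%C.
Proof.
  intros [C1 [M1 [R1 [HC1 H1]]]] [C2 [M2 [R2 [HC2 H2]]]].
  exists (C1 + C2), (M1 + M2)%nat, (Rmax 1 (Rmax R1 R2)). split. lra.
  intros w Hw.
  pose proof (Rmax_l 1 (Rmax R1 R2)). pose proof (Rmax_r 1 (Rmax R1 R2)).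
  pose proof (Rmax_l R1 R2). pose proof (Rmax_r R1 R2).
  assert (Hw1 : 1 <= Cmod w) by lra.
  pose proof (Rle_pow (Cmod w) M1 (M1 + M2) Hw1 ltac:(lia)).
  pose proof (Rle_pow (Cmod w) M2 (M1 + M2) Hw1 ltac:(lia)).
  specialize (H1 w ltac:(lra)). specialize (H2 w ltac:(lra)).
  eapply Rle_trans. apply Cmod_sub_le.
  assert (C1 * Cmod w ^ M1 <= C1 * Cmod w ^ (M1 + M2)) by (apply Rmult_le_compat_l; auto).
  assert (C2 * Cmod w ^ M2 <= C2 * Cmod w ^ (M1 + M2)) by (apply Rmult_le_compat_l; auto).
  lra.
Qed.

Lemma poly_growth_ext g k : (forall w, g w = k w) -> poly_growth g -> poly_growth k.
Proof.
  intros E [Cc [M [R0 [HC Hb]]]]. exists Cc, M, R0. split; auto.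
  intros w Hw. rewrite <- E. auto.
Qed.

Definition psub (p q : Cpoly) : Cpoly := padd p (pscale (RtoC (-1)) q).

Lemma peval_psub p q z : peval (psub p q) z = (peval p z - peval q z)%C.
Proof. unfold psub. rewrite peval_padd, peval_pscale. cring. Qed.

Lemma coef_psub_neq0 p q k : coef p k <> coef q k -> coef (psub p q) k <> C0.
Proof.
  unfold psub. rewrite coef_padd, coef_pscale. intros Hne E. apply Hne.
  replace (coef p k) with (coef p k + RtoC (-1) * coef q k + coef q k)%C by cring.
  rewrite E. cring.
Qed.

Lemma nonconstant_poly_unbounded p k : (1 <= k)%nat -> coef p k <> C0 ->
  forall D, exists R, forall z, R <= Cmod z -> D <= Cmod (peval p z).
Proof.
  intros Hk Hc D.
  destruct (peval_lower_bound p k Hc) as [c [e [R0 [Hc0 [HR0 [Hke Hlb]]]]]].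
  exists (Rmax (Rmax 1 R0) (D / c)). intros z Hz.
  pose proof (Rmax_l (Rmax 1 R0) (D / c)). pose proof (Rmax_r (Rmax 1 R0) (D / c)).
  pose proof (Rmax_l 1 R0). pose proof (Rmax_r 1 R0).
  assert (Hz1 : 1 <= Cmod z) by lra.
  eapply Rle_trans; [|apply Hlb; lra].
  pose proof (Rle_pow (Cmod z) 1 e Hz1 ltac:(lia)) as PW. rewrite pow_1 in PW.
  apply Rle_trans with (c * Cmod z). 2: apply Rmult_le_compat_l; lra.
  replace D with (D / c * c) by (field; lra). rewrite (Rmult_comm c). apply Rmult_le_compat_r; lra.
Qed.

Definition node (j : nat) : C := (INR j, 0).
Fixpoint inv_node_prod (k : nat) (w : C) : C :=
  match k with O => RtoC 1 | S k => (inv_node_prod k w * / (w - node k))%C end.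
Fixpoint node_prod (k : nat) (u : C) : C :=
  match k with O => RtoC 1 | S k => (node_prod k u * (u - node k))%C end.

Definition in_square R (v : C) := Rabs (fst v) < R /\ Rabs (snd v) < R.

Lemma square_boundary_avoids R w v : on_boundary (-R) R (-R) R w -> in_square R v -> w <> v.
Proof.
  intros Hw [H1 H2] E. subst v.
  assert (R > 0) by (pose proof (Rabs_pos (fst w)); lra).
  destruct Hw as [[A [B|B]]|[A [B|B]]]; rewrite B in *.
  - rewrite Rabs_Ropp, Rabs_pos_eq in H2; lra.
  - rewrite Rabs_pos_eq in H2; lra.
  - rewrite Rabs_Ropp, Rabs_pos_eq in H1; lra.
  - rewrite Rabs_pos_eq in H1; lra.
Qed.

Lemma square_boundary_mod R w : 0 <= R -> on_boundary (-R) R (-R) R w -> R <= Cmod w /\ Cmod w <= 2 * R.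
Proof.
  intros HR Hw. pose proof (Rmax_Cmod w). pose proof (Cmod_le_abs w).
  pose proof (Rmax_l (Rabs (fst w)) (Rabs (snd w))). pose proof (Rmax_r (Rabs (fst w)) (Rabs (snd w))).
  destruct Hw as [[A [B|B]]|[A [B|B]]]; rewrite B in *; rewrite ?Rabs_Ropp, (Rabs_pos_eq R) in * by lra;
  [assert (Rabs (fst w) <= R) by (apply Rabs_le; lra)|assert (Rabs (fst w) <= R) by (apply Rabs_le; lra)
  |assert (Rabs (snd w) <= R) by (apply Rabs_le; lra)|assert (Rabs (snd w) <= R) by (apply Rabs_le; lra)];
  split; lra.
Qed.

Lemma node_in_square R j : INR j < R -> in_square R (node j).
Proof. intros H. pose proof (pos_INR j). unfold in_square, node; simpl. rewrite Rabs_R0, Rabs_pos_eq; lra. Qed.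

Lemma small_in_square R v : Cmod v < R -> in_square R v.
Proof. intros H. split. pose proof (fst_le_Cmod v); lra. pose proof (snd_le_Cmod v); lra. Qed.

Lemma Cmod_node j : Cmod (node j) = INR j.
Proof. unfold node. change (INR j, 0) with (RtoC (INR j)). rewrite Cmod_R. apply Rabs_pos_eq, pos_INR. Qed.

Lemma cdiff_inv_node_prod k w : (forall j, (j < k)%nat -> w <> node j) -> cdiff (inv_node_prod k) w.
Proof.
  induction k; intros H; simpl.
  - apply cdiff_const.
  - apply cdiff_mul. apply IHk. intros; apply H; lia. apply cdiff_inv_lin. apply H. lia.
Qed.

Lemma inv_node_prod_bound R k w : 0 < R -> (forall j, (j < k)%nat -> R / 2 <= Cmod (w - node j)%C) ->
  Cmod (inv_node_prod k w) <= 2 ^ k / R ^ k.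
Proof.
  intros HR. induction k; intros H; simpl.
  - rewrite Cmod_1. right. field.
  - rewrite Cmod_mult.
    assert (Hk : R / 2 <= Cmod (w - node k)%C) by (apply H; lia).
    assert (Hnz : (w - node k)%C <> RtoC 0) by (intro E; rewrite E, Cmod_0 in Hk; lra).
    rewrite Cmod_inv by auto.
    pose proof (pow_lt R k HR).
    apply Rle_trans with (2 ^ k / R ^ k * (2 / R)).
    apply Rmult_le_compat. apply Cmod_ge_0. left; apply Rinv_0_lt_compat; lra.
    apply IHk; intros; apply H; lia.
    replace (2 / R) with (/ (R / 2)) by (field; lra). apply Rinv_le_contravar; lra.
    right. field. lra.
Qed.

Lemma node_prod_at_node n m : (m < n)%nat -> node_prod n (node m) = RtoC 0.
Proof.
  induction 1; simpl. replace (node m - node m)%C with (RtoC 0) by ring. ring.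
  rewrite IHle. ring.
Qed.

Lemma node_prod_at_own_node m : node_prod m (node m) <> RtoC 0.
Proof.
  assert (forall k, (k <= m)%nat -> node_prod k (node m) <> RtoC 0).
  { induction k; intros Hk; simpl. intro E; injection E; lra.
    apply Cmult_neq_0. apply IHk; lia. apply Cminus_neq0. unfold node. intro E. injection E as E.
    apply INR_eq in E. lia. }
  apply H. lia.
Qed.

Lemma PF_node_prod k : PolyFun (node_prod k).
Proof.
  induction k; simpl. apply PF_const.
  apply PF_mul; auto. eapply PF_ext. apply PF_add. apply PF_id. apply (PF_const (- node k)%C).
  intros; cbv beta; ring.
Qed.

Section KernelIntegrals.
Variable f : C -> C.
Hypothesis Hf : forall z, cdiff f z.

Definition kernel_integral R k u :=
  rect_integral (fun w => f w * inv_node_prod k w * / (w - u))%C (-R) R (-R) R.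

Lemma kernel_integrand_cont R k u w : in_square R u -> (forall j, (j < k)%nat -> INR j < R) ->
  on_boundary (-R) R (-R) R w -> ccont (fun w => f w * inv_node_prod k w * / (w - u))%C w.
Proof.
  intros Hu Hj Hw. apply cdiff_ccont. apply cdiff_mul. apply cdiff_mul. auto.
  apply cdiff_inv_node_prod. intros j Hjk. apply (square_boundary_avoids R); auto. apply node_in_square; auto.
  apply cdiff_inv_lin. apply (square_boundary_avoids R); auto.
Qed.

Lemma kernel_integral_0 R u : in_square R u -> kernel_integral R 0 u = (f u * two_pi_i)%C.
Proof.
  intros [Hu1 Hu2]. unfold kernel_integral.
  rewrite (rect_integral_ext _ (fun w => f w * / (w - u))%C).
  - destruct (Rabs_def2 _ _ Hu1). destruct (Rabs_def2 _ _ Hu2). apply cauchy_formula; auto; lra.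
  - pose proof (Rabs_pos (fst u)). lra.
  - pose proof (Rabs_pos (fst u)). lra.
  - intros; simpl; cring.
Qed.

(* Divided-difference step, from
   1/(w - u) - 1/(w - x_k) = (u - x_k) / ((w - u)(w - x_k)). *)
Lemma kernel_integral_step R k u : 0 < R -> in_square R u -> (forall j, (j <= k)%nat -> INR j < R) ->
  (kernel_integral R k u - kernel_integral R k (node k))%C = ((u - node k) * kernel_integral R (S k) u)%C.
Proof.
  intros HR Hu Hj.
  assert (Hjk : forall j, (j < k)%nat -> INR j < R) by (intros; apply Hj; lia).
  assert (Hxk : in_square R (node k)) by (apply node_in_square; auto).
  unfold kernel_integral.
  replace (rect_integral (fun w => f w * inv_node_prod k w * / (w - u))%C (-R) R (-R) R
           - rect_integral (fun w => f w * inv_node_prod k w * / (w - node k))%C (-R) R (-R) R)%C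
    with (rect_integral (fun w => f w * inv_node_prod k w * / (w - u))%C (-R) R (-R) R
          + (-1) * rect_integral (fun w => f w * inv_node_prod k w * / (w - node k))%C (-R) R (-R) R)%C
    by ring.
  rewrite <- rect_integral_scal, <- rect_integral_plus, <- rect_integral_scal; try lra;
    try (intros w Hw; apply (kernel_integrand_cont R); auto; intros; apply Hj; lia).
  2: { intros w Hw. apply cdiff_ccont, cdiff_scal. apply cdiff_mul.
       - apply cdiff_mul; auto. apply cdiff_inv_node_prod. intros j Hj'.
         apply (square_boundary_avoids R); auto. apply node_in_square; auto.
       - apply cdiff_inv_lin. apply (square_boundary_avoids R); auto. }
  apply rect_integral_ext; try lra. intros w Hw. simpl.
  pose proof (Cminus_neq0 _ _ (square_boundary_avoids R w u Hw Hu)).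
  pose proof (Cminus_neq0 _ _ (square_boundary_avoids R w (node k) Hw Hxk)).
  field. auto.
Qed.

Lemma kernel_integral_expansion R u m : 0 < R -> in_square R u -> (forall j, (j < m)%nat -> INR j < R) ->
  kernel_integral R 0 u =
  (Csum m (fun k => kernel_integral R k (node k) * node_prod k u) + node_prod m u * kernel_integral R m u)%C.
Proof.
  intros HR Hu. induction m; intros Hj.
  - rewrite Csum_0. simpl. cring.
  - rewrite IHm by (intros; apply Hj; lia). rewrite Csum_S. simpl.
    pose proof (kernel_integral_step R m u HR Hu ltac:(intros; apply Hj; lia)) as Hstep.
    replace (kernel_integral R m u) with (kernel_integral R m (node m) + (u - node m) * kernel_integral R (S m) u)%C
      by (rewrite <- Hstep; ring).
    cring.
Qed.

Lemma kernel_integral_bound M Cc R0 u R : 0 <= Cc ->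
  (forall w, R0 <= Cmod w -> Cmod (f w) <= Cc * Cmod w ^ M) ->
  0 < R -> R0 <= R -> 2 * (INR M + 1) <= R -> 2 * Cmod u <= R ->
  Cmod (kernel_integral R (S M) u) <= 16 * Cc * 4 ^ (S M) / R.
Proof.
  intros HCc Hg HR HR0 HRM Hu.
  assert (Hins : in_square R u) by (apply small_in_square; pose proof (Cmod_ge_0 u); lra).
  assert (Hj : forall j, (j <= M)%nat -> INR j < R) by (intros j Hj; apply le_INR in Hj; lra).
  set (Mb := Cc * (2 ^ M * R ^ M) * (2 ^ (S M) / R ^ (S M)) * (2 / R)).
  apply Rle_trans with (4 * Mb * ((R - - R) + (R - - R))).
  - unfold kernel_integral. apply rect_integral_bound; try lra.
    + intros w Hw. apply (kernel_integrand_cont R (S M)); auto. intros; apply Hj; lia.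
    + intros w Hw. destruct (square_boundary_mod R w ltac:(lra) Hw) as [Hw1 Hw2].
      rewrite !Cmod_mult.
      assert (Hwu : R / 2 <= Cmod (w - u)%C) by (pose proof (Cmod_tri_sub w u); lra).
      assert (Hnz : (w - u)%C <> RtoC 0) by (intro E; rewrite E, Cmod_0 in Hwu; lra).
      rewrite Cmod_inv by auto.
      unfold Mb. apply Rmult_le_compat; try apply Rmult_le_pos; try apply Cmod_ge_0;
        try (left; apply Rinv_0_lt_compat; lra).
      * apply Rmult_le_compat; try apply Cmod_ge_0.
        -- eapply Rle_trans. apply Hg; lra. apply Rmult_le_compat_l; auto.
           rewrite <- Rpow_mult_distr. apply pow_incr. split. apply Cmod_ge_0. lra.
        -- apply inv_node_prod_bound; auto. intros j Hjk.
           pose proof (Cmod_tri_sub w (node j)) as Hd. rewrite Cmod_node in Hd.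
           assert (INR j <= INR M) by (apply le_INR; lia). lra.
      * replace (2 / R) with (/ (R / 2)) by (field; lra). apply Rinv_le_contravar; lra.
  - unfold Mb. right. replace (4 ^ S M) with (2 ^ S M * 2 ^ S M) by (rewrite <- Rpow_mult_distr; f_equal; lra).
    simpl. field. split. lra. apply pow_nonzero. lra.
Qed.

Variable M : nat.

Definition newton_coef R k := (kernel_integral R k (node k) / two_pi_i)%C.

Lemma newton_representation R u : 0 < R -> in_square R u -> (forall j, (j <= M)%nat -> INR j < R) ->
  f u = (Csum (S M) (fun k => newton_coef R k * node_prod k u)
         + node_prod (S M) u * kernel_integral R (S M) u / two_pi_i)%C.
Proof.
  intros HR Hu Hj.
  pose proof (kernel_integral_expansion R u (S M) HR Hu ltac:(intros; apply Hj; lia)) as T.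
  rewrite kernel_integral_0 in T by auto.
  unfold newton_coef.
  rewrite (Csum_ext _ _ (fun k => / two_pi_i * (kernel_integral R k (node k) * node_prod k u))%C)
    by (intros; unfold Cdiv; ring).
  rewrite Csum_scal.
  pose proof two_pi_i_neq0 as HJ.
  transitivity (f u * two_pi_i / two_pi_i)%C. field; auto.
  rewrite T. field. auto.
Qed.

Lemma newton_representation_at_node R m : 0 < R -> (forall j, (j <= M)%nat -> INR j < R) -> (m <= M)%nat ->
  f (node m) = Csum (S M) (fun k => newton_coef R k * node_prod k (node m))%C.
Proof.
  intros HR Hj Hm. rewrite (newton_representation R (node m)) by (auto; apply node_in_square; auto).
  rewrite node_prod_at_node by lia. unfold Cdiv. rewrite !Cmult_0_l, Cplus_0_r. reflexivity.
Qed.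

(* The Newton coefficients do not depend on the square: the values at the
   nodes determine them (the system is triangular with nonzero diagonal). *)
Lemma newton_coef_indep R R' : 0 < R -> 0 < R' -> (forall j, (j <= M)%nat -> INR j < R) ->
  (forall j, (j <= M)%nat -> INR j < R') -> forall k, (k <= M)%nat -> newton_coef R k = newton_coef R' k.
Proof.
  intros HR HR' Hj Hj'.
  set (d := fun k => (newton_coef R k - newton_coef R' k)%C).
  assert (Hsum : forall m, (m <= M)%nat -> Csum (S M) (fun k => d k * node_prod k (node m))%C = RtoC 0).
  { intros m Hm. unfold d.
    rewrite (Csum_ext _ _ (fun k => newton_coef R k * node_prod k (node m)
                                  - newton_coef R' k * node_prod k (node m))%C) by (intros; ring).
    rewrite Csum_minus, <- !newton_representation_at_node by auto. cring. }
  assert (Hall : forall m, (m <= S M)%nat -> forall k, (k < m)%nat -> d k = RtoC 0).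
  { induction m; intros Hm k Hk. lia.
    destruct (Nat.eq_dec k m) as [->|Hne]; [|apply IHm; lia].
    specialize (Hsum m ltac:(lia)).
    rewrite (Csum_tail (S m) (S M)) in Hsum.
    2: lia. 2: { intros k' Hk'. rewrite node_prod_at_node by lia. ring. }
    rewrite Csum_S, Csum_zero in Hsum. 2: { intros k' Hk'. rewrite IHm; try lia. ring. }
    assert (Hdm : (d m * node_prod m (node m))%C = RtoC 0) by (rewrite <- Hsum; ring).
    assert (Hp := node_prod_at_own_node m).
    replace (d m) with (d m * node_prod m (node m) / node_prod m (node m))%C by (field; auto).
    rewrite Hdm. unfold Cdiv. apply Cmult_0_l. }
  intros k Hk. assert (Hdk : d k = RtoC 0) by (apply (Hall (S M)); lia).
  unfold d in Hdk. replace (newton_coef R k) with (newton_coef R k - newton_coef R' k + newton_coef R' k)%C by ring.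
  rewrite Hdk. ring.
Qed.
Lemma newton_remainder_bound Cc R0 u R : 0 <= Cc ->
  (forall w, R0 <= Cmod w -> Cmod (f w) <= Cc * Cmod w ^ M) ->
  R0 <= R -> 2 * (INR M + 1) <= R -> 2 * Cmod u <= R ->
  Cmod (f u - Csum (S M) (fun k => newton_coef (INR M + 1) k * node_prod k u))%C
    <= Cmod (node_prod (S M) u) * (16 * Cc * 4 ^ S M) / Cmod two_pi_i / R.
Proof.
  intros HCc Hg HR0 HRM Hu.
  pose proof (pos_INR M). pose proof (Cmod_ge_0 u).
  assert (HR : 0 < R) by lra.
  assert (Hj : forall j, (j <= M)%nat -> INR j < R) by (intros j Hjm; apply le_INR in Hjm; lra).
  assert (Hj1 : forall j, (j <= M)%nat -> INR j < INR M + 1) by (intros j Hjm; apply le_INR in Hjm; lra).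
  assert (HJ : 0 < Cmod two_pi_i) by (apply Cmod_gt_0, two_pi_i_neq0).
  rewrite (newton_representation R u) by (auto; apply small_in_square; lra).
  rewrite (Csum_ext _ (fun k => newton_coef R k * node_prod k u)%C
                      (fun k => newton_coef (INR M + 1) k * node_prod k u)%C)
    by (intros k Hk; rewrite (newton_coef_indep R (INR M + 1)); auto; lia || lra).
  replace (_ + node_prod (S M) u * kernel_integral R (S M) u / two_pi_i - _)%C
    with (node_prod (S M) u * kernel_integral R (S M) u / two_pi_i)%C by ring.
  unfold Cdiv. rewrite !Cmod_mult, Cmod_inv by (apply two_pi_i_neq0).
  pose proof (kernel_integral_bound M Cc R0 u R HCc Hg HR HR0 HRM Hu) as HKb.
  replace (Cmod (node_prod (S M) u) * (16 * Cc * 4 ^ S M) / Cmod two_pi_i / R)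
    with (Cmod (node_prod (S M) u) * (16 * Cc * 4 ^ S M / R) * / Cmod two_pi_i) by (field; lra).
  apply Rmult_le_compat_r. left; apply Rinv_0_lt_compat; auto.
  apply Rmult_le_compat_l. apply Cmod_ge_0. auto.
Qed.
End KernelIntegrals.

(* Liouville's theorem with polynomial growth: an entire function with
   [|f w| <= Cc |w|^M] for large [|w|] is the Newton polynomial of degree
   [M] interpolating it at 0, ..., M, since the remainder is O(1/R). *)
Theorem liouville_poly_growth f : (forall z, cdiff f z) -> poly_growth f -> PolyFun f.
Proof.
  intros Hf [Cc [M [R0 [HCc Hg]]]].
  set (N := fun u => Csum (S M) (fun k => newton_coef f (INR M + 1) k * node_prod k u)%C).
  apply PF_ext with N.
  { unfold N. apply PF_Csum. intros k. apply PF_mul. apply PF_const. apply PF_node_prod. }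
  intros u. symmetry.
  set (K := Cmod (node_prod (S M) u) * (16 * Cc * 4 ^ S M) / Cmod two_pi_i).
  assert (HK : 0 <= K).
  { assert (0 < Cmod two_pi_i) by (apply Cmod_gt_0, two_pi_i_neq0).
    unfold K. apply Rmult_le_pos. apply Rmult_le_pos. apply Cmod_ge_0. apply Rmult_le_pos. lra.
    apply pow_le; lra. left; apply Rinv_0_lt_compat; auto. }
  set (Rb := Rmax (Rmax R0 (2 * (INR M + 1))) (2 * Cmod u) + 1).
  pose proof (Rmax_l (Rmax R0 (2 * (INR M + 1))) (2 * Cmod u)).
  pose proof (Rmax_r (Rmax R0 (2 * (INR M + 1))) (2 * Cmod u)).
  pose proof (Rmax_l R0 (2 * (INR M + 1))). pose proof (Rmax_r R0 (2 * (INR M + 1))).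
  pose proof (pos_INR M). pose proof (Cmod_ge_0 u).
  assert (HRb : 0 < Rb) by (unfold Rb; lra).
  assert (E : Cmod (f u - N u)%C = 0).
  { apply (le_eps_eq0 _ K (/ Rb)); auto using Cmod_ge_0. apply Rinv_0_lt_compat; auto.
    intros eps [He1 He2].
    assert (HR : Rb < / eps).
    { replace Rb with (/ / Rb) by (field; lra). apply Rinv_lt_contravar; auto.
      apply Rmult_lt_0_compat; auto. apply Rinv_0_lt_compat; auto. }
    replace (eps * K) with (K / / eps) by (field; lra).
    apply (newton_remainder_bound f Hf M Cc R0 u (/ eps)); auto; unfold Rb in HR; lra. }
  apply Cmod_eq_0 in E.
  replace (f u) with ((f u - N u) + N u)%C by ring. rewrite E. ring.
Qed.

(* Bivariate polynomials in [d] and [Y], as polynomials in [Y] whose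
   coefficients are polynomials in [d]: [bpeval [h0; h1; ...] d Y =
   h0(d) + Y (h1(d) + Y (...))]. *)
Definition bpoly := list Cpoly.
Fixpoint bpeval (H : bpoly) (d Y : C) : C :=
  match H with nil => RtoC 0 | h :: H' => (peval h d + Y * bpeval H' d Y)%C end.
Fixpoint badd (H K : bpoly) : bpoly :=
  match H, K with
  | nil, _ => K
  | _, nil => H
  | h :: H', k :: K' => padd h k :: badd H' K'
  end.
Fixpoint bmul (H K : bpoly) : bpoly :=
  match H with nil => nil | h :: H' => badd (map (pmul h) K) (nil :: bmul H' K) end.

Lemma bpeval_badd H K d Y : bpeval (badd H K) d Y = (bpeval H d Y + bpeval K d Y)%C.
Proof.
  revert K. induction H as [|h H IH]; intros [|k K]; simpl badd; simpl bpeval; try cring.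
  rewrite peval_padd, IH. cring.
Qed.

Lemma bpeval_scale p K d Y : bpeval (map (pmul p) K) d Y = (peval p d * bpeval K d Y)%C.
Proof. induction K as [|k K IH]; simpl. cring. rewrite peval_pmul, IH. cring. Qed.

Lemma bpeval_bmul H K d Y : bpeval (bmul H K) d Y = (bpeval H d Y * bpeval K d Y)%C.
Proof.
  induction H as [|h H IH]; simpl bmul. simpl. cring.
  rewrite bpeval_badd, bpeval_scale. simpl bpeval. rewrite IH. cring.
Qed.

Definition BPolyFun (G : C -> C -> C) : Prop := exists H, forall d Y, G d Y = bpeval H d Y.

Lemma BPF_ext G K : BPolyFun G -> (forall d Y, G d Y = K d Y) -> BPolyFun K.
Proof. intros [H HH] E. exists H. intros. rewrite <- E. auto. Qed.
Lemma BPF_d g : PolyFun g -> BPolyFun (fun d Y => g d).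
Proof. intros [p Hp]. exists (p :: nil). intros. cbn [bpeval]. rewrite Hp. cring. Qed.
Lemma BPF_const c : BPolyFun (fun d Y => c).
Proof. apply (BPF_d (fun _ => c)). apply PF_const. Qed.
Lemma BPF_Y : BPolyFun (fun d Y => Y).
Proof.
  exists (nil :: (Defs.C1 :: nil) :: nil). intros. cbn [bpeval]. rewrite !peval_cons, !peval_nil.
  unfold Defs.C1. change (1, 0) with (RtoC 1). cring.
Qed.
Lemma BPF_add G K : BPolyFun G -> BPolyFun K -> BPolyFun (fun d Y => G d Y + K d Y)%C.
Proof. intros [H HH] [L HL]. exists (badd H L). intros. rewrite bpeval_badd, HH, HL. auto. Qed.
Lemma BPF_mul G K : BPolyFun G -> BPolyFun K -> BPolyFun (fun d Y => G d Y * K d Y)%C.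
Proof. intros [H HH] [L HL]. exists (bmul H L). intros. rewrite bpeval_bmul, HH, HL. auto. Qed.
Lemma BPF_Csum n (F : nat -> C -> C -> C) : (forall k, BPolyFun (F k)) ->
  BPolyFun (fun d Y => Csum n (fun k => F k d Y)).
Proof.
  intros H. induction n. eapply BPF_ext. apply (BPF_const (RtoC 0)). intros; reflexivity.
  eapply BPF_ext. apply BPF_add. apply IHn. apply H. intros. rewrite Csum_S. auto.
Qed.
Lemma BPF_pow G n : BPolyFun G -> BPolyFun (fun d Y => Defs.Cpow (G d Y) n).
Proof.
  intros HG. induction n. eapply BPF_ext. apply (BPF_const (RtoC 1)). intros; reflexivity.
  eapply BPF_ext. apply BPF_mul. apply HG. apply IHn. intros. reflexivity.
Qed.

(* A coefficient array whose polynomial vanishes everywhere is zero: apply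
   the identity theorem first in [X], then in [Y]. *)
Lemma beval_zero N c : (forall X Y, beval N c X Y = RtoC 0) ->
  forall i j, (i <= N)%nat -> (j <= N)%nat -> c i j = C0.
Proof.
  intros H i j Hi Hj.
  assert (H1 : forall Y i, (i <= N)%nat -> Csum (S N) (fun j => c i j * Defs.Cpow Y j)%C = RtoC 0).
  { intros Y i' Hi'.
    set (p := map (fun i => Csum (S N) (fun j => c i j * Defs.Cpow Y j)%C) (seq 0 (S N))).
    assert (Hp : forall X, peval p X = RtoC 0).
    { intros X. unfold p. rewrite peval_map_seq. rewrite <- (H X Y). unfold beval.
      apply Csum_ext. intros k _. simpl plus. rewrite <- Csum_scal_r.
      apply Csum_ext. intros l _. replace (0 + k)%nat with k by lia. cring. }
    pose proof (peval_zero_fun p Hp i') as E. unfold p in E. rewrite coef_map_seq in E by lia.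
    rewrite E. reflexivity. }
  set (q := map (fun j => c i j) (seq 0 (S N))).
  assert (Hq : forall Y, peval q Y = RtoC 0).
  { intros Y. unfold q. rewrite peval_map_seq. simpl plus. apply H1. auto. }
  pose proof (peval_zero_fun q Hq j) as E. unfold q in E. rewrite coef_map_seq in E by lia. auto.
Qed.

Definition bpoly_nonzero (H : bpoly) : Prop := exists k i, coef (nth k H nil) i <> C0.

Lemma bpeval_zero H : ~ bpoly_nonzero H -> forall d Y, bpeval H d Y = RtoC 0.
Proof.
  induction H as [|h H IH]; intros Hn d Y. reflexivity.
  simpl. rewrite (peval_zero_coefs h), IH. cring.
  intros [k [i Hki]]. apply Hn. exists (S k), i. auto.
  intros i. destruct (classic (coef h i = C0)); auto. exfalso. apply Hn. exists 0%nat, i. auto.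
Qed.

Lemma shifted_bpoly N c : (exists i j, (i <= N)%nat /\ (j <= N)%nat /\ c i j <> C0) ->
  exists H, bpoly_nonzero H /\ forall d Y, beval N c (Y + d)%C Y = bpeval H d Y.
Proof.
  intros Hc.
  assert (HF : BPolyFun (fun d Y => beval N c (Y + d)%C Y)).
  { unfold beval. apply BPF_Csum. intros i. apply BPF_Csum. intros j.
    apply BPF_mul. apply BPF_const. apply BPF_mul.
    apply BPF_pow. apply BPF_add. apply BPF_Y. apply BPF_d. apply PF_id.
    apply BPF_pow. apply BPF_Y. }
  destruct HF as [H HH]. exists H. split; auto.
  apply NNPP. intro HnB.
  assert (Hz0 : forall X Y, beval N c X Y = RtoC 0).
  { intros X Y. replace X with (Y + (X - Y))%C by cring. rewrite HH. apply bpeval_zero; auto. }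
  destruct Hc as [i [j [Hi [Hj Hij]]]]. apply Hij. apply (beval_zero N c Hz0); auto.
Qed.

(* Lower bound for a nonzero bivariate polynomial: once [|d|] is large and
   [|Y|] dominates a power of [|d|], the term of highest [Y]-degree wins. *)
Lemma bpoly_lower_bound H : bpoly_nonzero H -> exists Cg E D0 cg m, 0 <= Cg /\ 1 <= D0 /\ 0 < cg /\
  forall d Y, D0 <= Cmod d -> Cg * Cmod d ^ E <= Cmod Y -> 1 <= Cmod Y ->
    cg * Cmod Y ^ m <= Cmod (bpeval H d Y).
Proof.
  induction H as [|h H IH]; intros Hnz.
  - exfalso. destruct Hnz as [k [i Hk]]. destruct k; simpl in Hk; rewrite coef_nil in Hk; auto.
  - destruct (classic (bpoly_nonzero H)) as [HB|HB].
    + destruct (IH HB) as [Cg [E [D0 [cg [m [HCg [HD0 [Hcg Hb]]]]]]]].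
      destruct (peval_upper_bound h) as [B [HB0 Hub]].
      set (L := length h) in *.
      pose proof (pow_lt 2 L ltac:(lra)) as P2.
      set (Ch := 2 * B * 2 ^ L / cg).
      assert (HCh : 0 <= Ch) by (apply Rcomplements.Rdiv_le_0_compat; nra).
      exists (Cg + Ch), (E + L)%nat, D0, (cg / 2), (S m). repeat split; try lra.
      intros d Y Hd HY HY1. simpl bpeval.
      assert (Hd1 : 1 <= Cmod d) by lra.
      pose proof (Rle_pow (Cmod d) E (E + L) Hd1 ltac:(lia)) as PE.
      pose proof (Rle_pow (Cmod d) L (E + L) Hd1 ltac:(lia)) as PL.
      pose proof (pow_ge1 (Cmod d) E Hd1). pose proof (pow_ge1 (Cmod d) L Hd1).
      assert (HY2 : Cg * Cmod d ^ E <= Cmod Y) by (eapply Rle_trans; [|exact HY]; apply Rmult_le_compat; lra).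
      assert (HY3 : Ch * Cmod d ^ L <= Cmod Y) by (eapply Rle_trans; [|exact HY]; apply Rmult_le_compat; lra).
      apply horner_lower_bound; auto.
      eapply Rle_trans. apply Hub.
      apply Rle_trans with (B * (2 ^ L * Cmod d ^ L)).
      { apply Rmult_le_compat_l; auto. rewrite <- Rpow_mult_distr. apply pow_incr.
        pose proof (Cmod_ge_0 d). lra. }
      replace (B * (2 ^ L * Cmod d ^ L)) with (cg / 2 * (Ch * Cmod d ^ L)) by (unfold Ch; field; lra).
      apply Rmult_le_compat_l; lra.
    + destruct Hnz as [k [i Hk]].
      destruct k as [|k]. 2: { exfalso. apply HB. exists k, i. auto. }
      simpl in Hk.
      destruct (peval_lower_bound h i Hk) as [c [e [R0 [Hc [HR0 [_ Hlb]]]]]].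
      exists 0, 0%nat, (Rmax R0 1), c, 0%nat.
      pose proof (Rmax_l R0 1). pose proof (Rmax_r R0 1).
      repeat split; try lra.
      intros d Y Hd _ _. simpl bpeval. rewrite (bpeval_zero H HB).
      replace (peval h d + Y * 0)%C with (peval h d) by cring.
      eapply Rle_trans; [|apply Hlb; lra]. rewrite pow_O, Rmult_1_r.
      rewrite <- (Rmult_1_r c) at 1. apply Rmult_le_compat_l; try lra. apply pow_ge1. lra.
Qed.

Lemma bpoly_root_bound H : bpoly_nonzero H -> exists Cg E D0, 0 <= Cg /\
  forall d Y, D0 <= Cmod d -> bpeval H d Y = RtoC 0 -> Cmod Y <= 1 + Cg * Cmod d ^ E.
Proof.
  intros HB. destruct (bpoly_lower_bound H HB) as [Cg [E [D0 [cg [m [HCg [HD0 [Hcg Hb]]]]]]]].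
  exists Cg, E, D0. split; auto. intros d Y Hd HY0.
  destruct (Rle_dec (Cmod Y) (1 + Cg * Cmod d ^ E)) as [Hle|Hgt]; auto. exfalso.
  assert (0 <= Cg * Cmod d ^ E) by (apply Rmult_le_pos; auto; apply pow_le, Cmod_ge_0).
  specialize (Hb d Y Hd ltac:(lra) ltac:(lra)). rewrite HY0, Cmod_0 in Hb.
  pose proof (pow_lt (Cmod Y) m ltac:(lra)). nra.
Qed.

Lemma algebraic_root_poly_growth H d k (Y : C -> C) : bpoly_nonzero H ->
  (1 <= k)%nat -> coef d k <> C0 ->
  (forall z, bpeval H (peval d z) (Y z) = RtoC 0) -> poly_growth Y.
Proof.
  intros HB Hk Hdk HY.
  destruct (bpoly_root_bound H HB) as [Cg [E [D0 [HCg Hroot]]]].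
  destruct (nonconstant_poly_unbounded d k Hk Hdk D0) as [R1 HR1].
  destruct (peval_poly_growth d) as [Cd [n [Rd [HCd Hd]]]].
  set (K := 1 + Cg * Cd ^ E).
  assert (HK : 1 <= K) by (unfold K; pose proof (pow_le Cd E HCd); nra).
  exists K, (n * E)%nat, (Rmax 1 (Rmax R1 Rd)). split; [lra|].
  intros z Hz.
  pose proof (Rmax_l 1 (Rmax R1 Rd)). pose proof (Rmax_r 1 (Rmax R1 Rd)).
  pose proof (Rmax_l R1 Rd). pose proof (Rmax_r R1 Rd).
  assert (Hz1 : 1 <= Cmod z) by lra.
  pose proof (pow_ge1 (Cmod z) (n * E) Hz1) as HW.
  assert (HdE : Cmod (peval d z) ^ E <= Cd ^ E * Cmod z ^ (n * E)).
  { rewrite pow_mult, <- Rpow_mult_distr. apply pow_incr. split. apply Cmod_ge_0. apply Hd. lra. }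
  eapply Rle_trans. apply (Hroot (peval d z) (Y z)); auto; apply HR1; lra.
  unfold K. rewrite Rmult_plus_distr_r, Rmult_1_l, Rmult_assoc.
  apply Rplus_le_compat. lra. apply Rmult_le_compat_l; auto.
Qed.

Theorem mainTheorem10 (f : Cx -> Cx) (P Q : Cpoly) :
  transcendental_entire f ->
  diff_nonconstant P Q ->
  alg_independent (fun z => Cadd (f z) (peval P z))
                  (fun z => Cadd (f z) (peval Q z)).
Proof.
  intros [Hent Hnt] [k0 [Hk0 HPQ]] N c Hc.
  apply NNPP. intros Hall.
  assert (Hrel : forall z, beval N c (Cadd (f z) (peval P z)) (Cadd (f z) (peval Q z)) = C0).
  { intros z. apply NNPP. intro Hne. apply Hall. exists z. auto. }
  destruct (shifted_bpoly N c Hc) as [H [HB HH]].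
  assert (HY : poly_growth (fun z => Cadd (f z) (peval Q z))).
  { apply (algebraic_root_poly_growth H (psub P Q) k0); auto using coef_psub_neq0.
    intros z. rewrite <- HH, peval_psub.
    replace (Cadd (f z) (peval Q z) + (peval P z - peval Q z))%C with (Cadd (f z) (peval P z)) by cring.
    apply Hrel. }
  apply Hnt, liouville_poly_growth; [apply entire_cdiff; auto|].
  apply (poly_growth_ext (fun z => Cadd (f z) (peval Q z) - peval Q z)%C); [intros; cring|].
  apply poly_growth_sub; auto. apply peval_poly_growth.
Qed.
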